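(* Let $(\Gamma,\lambda)$ be a tree plan with at least one infinity-node, and let $D=\deg P(\Gamma;x)$ (so $D\ge1$). Then $\mathcal{K}(\Gamma)$ is a $D$-dimensional asymptotic class of $\mathcal{L}_\Gamma$-structures, and for no positive integer $n<D$ is $\mathcal{K}(\Gamma)$ an $n$-dimensional asymptotic class.
   Context: Tree plans: a tree plan is a pair $(\Gamma,\lambda)$ where $\Gamma\subseteq\omega^{<\omega}$ is a finite set of finite sequences containing the empty sequence $\langle\rangle$ and closed under initial segments, and $\lambda:\Gamma\to\{1,\infty\}$ with $\lambda(\langle\rangle)=1$; nodes with $\lambda=\infty$ are infinity-nodes. For a non-empty set $X$ (and a fixed symbol $\star\notin X$), $\Gamma(X)$ is the set of finite sequences $\langle(i_0,t_0),\dots,(i_n,t_n)\rangle$ (including the empty one) such that $\langle i_0,\dots,i_n\rangle\in\Gamma$ and for each $k\le n$: $t_k=\star$ if $\lambda(\langle i_0,\dots,i_k\rangle)=1$, and $t_k\in X$ if $\lambda(\langle i_0,\dots,i_k\rangle)=\infty$. It is a tree under the initial-segment order, viewed as a structure in the language $\mathcal{L}_t$ with $\le$, root constant $\varepsilon$ (the empty sequence), meet $\sqcap$ (longest common initial segment) and $\mathtt{pred}$ (delete last entry; $\mathtt{pred}(\varepsilon)=\varepsilon$). The map $\pi_X:\Gamma(X)\to\Gamma$ sends $\langle(i_0,t_0),\dots,(i_n,t_n)\rangle$ to $\langle i_0,\dots,i_n\rangle$. The language $\mathcal{L}_\Gamma$ is $\mathcal{L}_t$ plus unary predicates $P_\sigma$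 ($\sigma\in\Gamma$) with $P_\sigma=\pi_X^{-1}(\sigma)$. $\Gamma(n)=\Gamma(\{1,\dots,n\})$, and $\mathcal{K}(\Gamma)$ is the class of finite $\mathcal{L}_\Gamma$-structures isomorphic to $\Gamma(n)$ for some $n\ge1$. Polynomial: with $\Gamma_\sigma=\{\tau:\sigma^\frown\tau\in\Gamma\}$, $\lambda_\sigma(\langle\rangle)=1$, $\lambda_\sigma(\tau)=\lambda(\sigma^\frown\tau)$ otherwise, define $P(\{\langle\rangle\};x)=1$ and $P(\Gamma;x)=1+\sum_{i<n}f_i(x)P(\Gamma_{\sigma_i};x)$ where $\sigma_0,\dots,\sigma_{n-1}$ are the immediate successors of $\langle\rangle$ and $f_i(x)=1$ if $\lambda(\sigma_i)=1$, $f_i(x)=x$ otherwise. (Equivalently $D$ is the maximum over $\sigma\in\Gamma$ of the number of infinity-nodes that are initial segments of $\sigma$.) Asymptotic classes: for a positive integer $N$, a class $\mathcal{K}$ of finite $\mathcal{L}$-structures is an $N$-dimensional asymptotic class if for every $\mathcal{L}$-formula $\varphi(x,\bar y)$ with $|\bar y|=m$ there is a finite set of triples $(d_i,\mu_i,\theta_i(\bar y))$, $i<k$, with $d_i\in\{0,\frac1N,\dots,\frac{N-1}N,1\}$, $\mu_i\in[0,\infty)$ and $\mu_i>0$ unless $d_i=0$, and $\theta_i$ $\mathcal{L}$-formulas, such that: (i) every $A\in\mathcal{K}$ satisfies $\forall\bar y\bigvee_{i<k}\theta_i(\bar y)$ and $\forall\bar y\,(\theta_i(\bar y)\to\neg\theta_j(\bar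 y))$ for $i\ne j$; (ii) for each $i<k$ and each $\epsilon>0$ there is $M$ such that for all $A\in\mathcal{K}$ with $|A|\ge M$ and all $\bar b\in A^m$ with $A\models\theta_i(\bar b)$, $\big||\varphi(A,\bar b)|-\mu_i|A|^{d_i}\big|\le\epsilon|A|^{d_i}$. *)

From Stdlib Require Import Reals List Lia.
Import ListNotations.
Open Scope R_scope.

(* A tree plan (Gamma, lambda): Gamma is a finite set of finite sequences of
   naturals, given as a list; lambda s = true means lambda(s) = infinity,
   lambda s = false means lambda(s) = 1. *)
Definition tree_plan (Gam : list (list nat)) (lam : list nat -> bool) : Prop :=
  In [] Gam /\
  (forall s t : list nat, In (s ++ t) Gam -> In s Gam) /\
  lam [] = false.

Definition count_inf (lam : list nat -> bool) (s : list nat) : nat :=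
  length (filter (fun k => lam (firstn k s)) (seq 1 (length s))).

(* D = deg P(Gamma; x) = max over sigma in Gamma of count_inf sigma
   (P(Gamma;x) = sum_{sigma in Gamma} x^(count_inf sigma)). *)
Definition degP (Gam : list (list nat)) (lam : list nat -> bool) : nat :=
  fold_right (fun s acc => Nat.max (count_inf lam s) acc) 0%nat Gam.

(* Elements: sequences <(i_0,t_0),...,(i_k,t_k)>, with t = None standing for
   the symbol star and t = Some x for x in X = {1,...,n}. *)
Definition elt := list (nat * option nat).

Definition in_GammaX (Gam : list (list nat)) (lam : list nat -> bool)
  (n : nat) (s : elt) : Prop :=
  In (map fst s) Gam /\
  forall k : nat, (k < length s)%nat ->
    match snd (nth k s (0%nat, None)) with
    | None => lam (firstn (S k) (map fst s)) = false
    | Some x => lam (firstn (S k) (map fst s)) = true /\ (1 <= x <= n)%nat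
    end.

Definition eqb_entry (a b : nat * option nat) : bool :=
  Nat.eqb (fst a) (fst b) &&
  match snd a, snd b with
  | None, None => true
  | Some x, Some y => Nat.eqb x y
  | _, _ => false
  end.

Fixpoint meet (s t : elt) : elt :=
  match s, t with
  | a :: s', b :: t' => if eqb_entry a b then a :: meet s' t' else []
  | _, _ => []
  end.

(* delete last entry; pred [] = [] *)
Definition predE (s : elt) : elt := removelast s.

Definition leE (s t : elt) : Prop := exists u, t = s ++ u.

Definition piX (s : elt) : list nat := map fst s.

Inductive term : Type :=
| TVar : nat -> term
| TRoot : term
| TMeet : term -> term -> term
| TPred : term -> term.

Inductive form : Type :=
| FEq : term -> term -> form
| FLe : term -> term -> form
| FP : list nat -> term -> form
| FNot : form -> form
| FAnd : form -> form -> form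
| FEx : form -> form.

Fixpoint term_wf (k : nat) (t : term) : Prop :=
  match t with
  | TVar i => (i < k)%nat
  | TRoot => True
  | TMeet t u => term_wf k t /\ term_wf k u
  | TPred t => term_wf k t
  end.

Fixpoint form_wf (Gam : list (list nat)) (k : nat) (phi : form) : Prop :=
  match phi with
  | FEq t u => term_wf k t /\ term_wf k u
  | FLe t u => term_wf k t /\ term_wf k u
  | FP sg t => In sg Gam /\ term_wf k t
  | FNot p => form_wf Gam k p
  | FAnd p q => form_wf Gam k p /\ form_wf Gam k q
  | FEx p => form_wf Gam (S k) p
  end.

Fixpoint tev (env : list elt) (t : term) : elt :=
  match t with
  | TVar i => nth i env []
  | TRoot => []
  | TMeet t u => meet (tev env t) (tev env u)
  | TPred t => predE (tev env t)
  end.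

(* satisfaction in Gamma(n); variable i is interpreted by the i-th entry of env *)
Fixpoint sat (Gam : list (list nat)) (lam : list nat -> bool) (n : nat)
  (env : list elt) (phi : form) : Prop :=
  match phi with
  | FEq t u => tev env t = tev env u
  | FLe t u => leE (tev env t) (tev env u)
  | FP sg t => In sg Gam /\ piX (tev env t) = sg
  | FNot p => ~ sat Gam lam n env p
  | FAnd p q => sat Gam lam n env p /\ sat Gam lam n env q
  | FEx p => exists a, in_GammaX Gam lam n a /\ sat Gam lam n (a :: env) p
  end.

Definition has_card {T : Type} (P : T -> Prop) (c : nat) : Prop :=
  exists l : list T, NoDup l /\ length l = c /\ (forall x, In x l <-> P x).

(* K(Gamma) is taken as the family Gamma(n), n >= 1.
   A triple (d_i, mu_i, theta_i) is encoded as (k_i, mu_i, theta_i) with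
   d_i = k_i / N, k_i <= N.  In phi(x, y), x is variable 0 and y_j is
   variable j+1; in theta_i(y), y_j is variable j. *)
Definition asymptotic_class (Gam : list (list nat)) (lam : list nat -> bool)
  (N : nat) : Prop :=
  forall (m : nat) (phi : form), form_wf Gam (S m) phi ->
  exists data : list (nat * R * form),
    (forall k mu th, In (k, mu, th) data ->
       (k <= N)%nat /\ 0 <= mu /\ (k <> 0%nat -> 0 < mu) /\ form_wf Gam m th) /\
    (forall n : nat, (1 <= n)%nat ->
       forall b : list elt, length b = m -> Forall (in_GammaX Gam lam n) b ->
         (exists i, (i < length data)%nat /\
            sat Gam lam n b (snd (nth i data (0%nat, 0, FEq TRoot TRoot)))) /\
         (forall i j, (i < length data)%nat -> (j < length data)%nat -> i <> j ->
            sat Gam lam n b (snd (nth i data (0%nat, 0, FEq TRoot TRoot))) ->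
            ~ sat Gam lam n b (snd (nth j data (0%nat, 0, FEq TRoot TRoot))))) /\
    (forall i, (i < length data)%nat ->
       forall eps : R, 0 < eps ->
       exists M : nat,
         forall n : nat, (1 <= n)%nat ->
         forall cA : nat, has_card (in_GammaX Gam lam n) cA -> (M <= cA)%nat ->
         forall b : list elt, length b = m -> Forall (in_GammaX Gam lam n) b ->
         sat Gam lam n b (snd (nth i data (0%nat, 0, FEq TRoot TRoot))) ->
         forall c : nat,
           has_card (fun a => in_GammaX Gam lam n a /\ sat Gam lam n (a :: b) phi) c ->
           let k := fst (fst (nth i data (0%nat, 0, FEq TRoot TRoot))) in
           let mu := snd (fst (nth i data (0%nat, 0, FEq TRoot TRoot))) in
           Rabs (INR c - mu * Rpower (INR cA) (INR k / INR N))
             <= eps * Rpower (INR cA) (INR k / INR N)).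

From Stdlib Require Import Reals List Arith Lia Lra Classical ClassicalEpsilon.
From Stdlib Require FinFun.
From Coquelicot Require Import Coquelicot.
Import List.
Import ListNotations.
Set Bullet Behavior "Strict Subproofs".

(* The *shape* of a tuple of elements of Gam(n) is the list of their
   projections to Gam together with the lengths of their pairwise meets.
   1. Indiscernibility: atomic formulas only see shapes, and a back-and-forth
      step extends shape equivalence by one element as long as n exceeds the
      tuple length (every infinity-node offers n labels, the tuple blocks fewer).
      Hence shape-equivalent tuples satisfy the same formulas of quantifier
      depth q once n > length + q.
   2. Counting: the fibre of Gam(n) over sigma has n^(count_inf sigma)
      elements, and the realisations of a shape over a tuple b of length m
      number between n^e (1 - m/n) and n^e, e being the number of infinity-nodes
      of the projection strictly beyond its longest meet with b.
   3. Definability: shapes are quantifier-free definable, so for large n the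
      set phi(Gam(n), b) is the union of the shapes selected by the formula
      theta_S(b) recording which shapes carry a witness of phi.  Comparing
      sum_(tau in S) n^e(tau) with |Gam(n)| = sum_sigma n^(count_inf sigma)
      ~ C n^D gives the data (e_S, mu_S, theta_S) of a D-dimensional class.
   4. Optimality: some sigma has exactly one infinity-node, so the set
      P_sigma(Gam(n)) has n ~ |Gam(n)|^(1/D) elements, an exponent that no
      dimension N < D can express. *)

Local Open Scope nat_scope.

(** * Meets of sequences *)

Definition mlen (x y : elt) : nat := length (meet x y).

Lemma eqb_entry_iff a b : eqb_entry a b = true <-> a = b.
Proof.
  destruct a as [i t], b as [j u]; unfold eqb_entry; simpl.
  rewrite Bool.andb_true_iff, Nat.eqb_eq.
  destruct t as [x|], u as [y|].
  - rewrite Nat.eqb_eq. split; [intros [-> ->]; auto | intros H; inversion H; auto].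
  - split; [intros [_ H]; discriminate | intros H; discriminate].
  - split; [intros [_ H]; discriminate | intros H; discriminate].
  - split; [intros [-> _]; auto | intros H; inversion H; auto].
Qed.

Lemma eqb_entry_refl a : eqb_entry a a = true.
Proof. apply eqb_entry_iff; reflexivity. Qed.

Lemma mlen_le_l x y : mlen x y <= length x.
Proof.
  unfold mlen; revert y; induction x as [|a x IH]; intros [|b y]; simpl; try lia.
  destruct (eqb_entry a b); simpl; try lia. specialize (IH y); lia.
Qed.

Lemma mlen_sym x y : mlen x y = mlen y x.
Proof.
  unfold mlen; revert y; induction x as [|a x IH]; intros [|b y]; simpl; auto.
  destruct (eqb_entry a b) eqn:E1; destruct (eqb_entry b a) eqn:E2; simpl; auto.
  - apply eqb_entry_iff in E1; subst. rewrite eqb_entry_refl in E2; discriminate.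
  - apply eqb_entry_iff in E2; subst. rewrite eqb_entry_refl in E1; discriminate.
Qed.

Lemma mlen_le_r x y : mlen x y <= length y.
Proof. rewrite mlen_sym; apply mlen_le_l. Qed.

Lemma mlen_refl x : mlen x x = length x.
Proof.
  unfold mlen; induction x as [|a x IH]; simpl; auto.
  rewrite eqb_entry_refl; simpl; auto.
Qed.

Lemma mlen_nil_r x : mlen x [] = 0.
Proof. destruct x; reflexivity. Qed.

Lemma firstn_eq_mlen x y A :
  A <= length x -> A <= length y -> (firstn A x = firstn A y <-> A <= mlen x y).
Proof.
  unfold mlen; revert y A; induction x as [|a x IH]; intros [|b y] A H1 H2; simpl in *.
  1-3: assert (A = 0) by lia; subst; simpl; split; auto.
  destruct A as [|A]; simpl.
  - split; intros; auto; lia.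
  - destruct (eqb_entry a b) eqn:E; simpl.
    + apply eqb_entry_iff in E; subst.
      rewrite <- Nat.succ_le_mono, <- (IH y A) by lia. split; intros H.
      * inversion H; auto.
      * f_equal; auto.
    + split; intros H; [|lia]. inversion H; subst.
      rewrite eqb_entry_refl in E; discriminate.
Qed.

Lemma meet_firstn x y : meet x y = firstn (mlen x y) x.
Proof.
  unfold mlen; revert y; induction x as [|a x IH]; intros [|b y]; simpl; auto.
  destruct (eqb_entry a b); simpl; auto. f_equal; auto.
Qed.

Lemma firstn_S_nth {A} (l : list A) k d :
  k < length l -> firstn (S k) l = firstn k l ++ [nth k l d].
Proof.
  revert k; induction l as [|a l IH]; intros [|k] H; simpl in *; try lia; auto.
  f_equal. apply IH; lia.
Qed.

Lemma mlen_gt_nth x y L d :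
  L < mlen x y -> L < length x /\ L < length y /\ nth L x d = nth L y d.
Proof.
  intros H. pose proof (mlen_le_l x y); pose proof (mlen_le_r x y).
  assert (Hf : firstn (S L) x = firstn (S L) y) by (apply firstn_eq_mlen; lia).
  split; [lia|split;[lia|]].
  rewrite (firstn_S_nth x L d), (firstn_S_nth y L d) in Hf by lia.
  apply app_inj_tail in Hf. destruct Hf; auto.
Qed.

Lemma mlen_agree x y z L :
  firstn L x = firstn L y -> L <= length x -> L <= length y ->
  Nat.min (mlen x z) L = Nat.min (mlen y z) L.
Proof.
  intros H Hx Hy.
  assert (Hgen : forall x y, firstn L x = firstn L y -> L <= length x -> L <= length y ->
     Nat.min (mlen x z) L <= Nat.min (mlen y z) L).
  { clear x y H Hx Hy. intros x y H Hx Hy.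
    set (A := Nat.min (mlen x z) L).
    pose proof (mlen_le_l x z); pose proof (mlen_le_r x z).
    assert (HA : firstn A x = firstn A z) by (apply firstn_eq_mlen; unfold A; lia).
    assert (HB : firstn A y = firstn A z).
    { rewrite <- HA.
      replace A with (Nat.min A L) by (unfold A; lia).
      rewrite <- !firstn_firstn, H; auto. }
    apply firstn_eq_mlen in HB; unfold A in *; lia. }
  apply Nat.le_antisymm; apply Hgen; auto.
Qed.

Lemma meet_firstn2 x y L L' :
  meet (firstn L x) (firstn L' y) = firstn (Nat.min (Nat.min L L') (mlen x y)) x.
Proof.
  unfold mlen; revert y L L'; induction x as [|a x IH]; intros y L L'.
  - rewrite !firstn_nil; reflexivity.
  - destruct L as [|L]; simpl; auto.
    destruct L' as [|L']; simpl.
    + destruct (firstn L x); reflexivity.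
    + destruct y as [|b y]; simpl; [destruct (firstn L x); reflexivity|].
      destruct (eqb_entry a b); simpl; auto. f_equal; apply IH.
Qed.

Lemma firstn_min {A} (x : list A) L : firstn L x = firstn (Nat.min L (length x)) x.
Proof. rewrite <- firstn_firstn, firstn_all; auto. Qed.

Lemma firstn_eq_iff x y L L' :
  firstn L x = firstn L' y <->
  (Nat.min L (length x) = Nat.min L' (length y) /\ Nat.min L (length x) <= mlen x y).
Proof.
  split.
  - intros H. assert (HA : Nat.min L (length x) = Nat.min L' (length y)).
    { rewrite <- !length_firstn, H; auto. }
    split; auto. rewrite (firstn_min x), (firstn_min y) in H. rewrite <- HA in H.
    apply firstn_eq_mlen in H; lia.
  - intros [HA Hm]. rewrite (firstn_min x), (firstn_min y), <- HA.
    pose proof (mlen_le_r x y).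
    apply firstn_eq_mlen; auto; try lia.
Qed.

Lemma leE_iff x y L L' :
  leE (firstn L x) (firstn L' y) <->
  (Nat.min L (length x) <= Nat.min L' (length y) /\ Nat.min L (length x) <= mlen x y).
Proof.
  unfold leE; split.
  - intros [u Hu].
    assert (HAB : Nat.min L (length x) <= Nat.min L' (length y)).
    { rewrite <- !length_firstn, Hu, length_app; lia. }
    split; auto.
    set (A := Nat.min L (length x)) in *.
    assert (H1 : firstn A (firstn L' y) = firstn L x).
    { rewrite Hu. replace A with (length (firstn L x) + 0) by (rewrite length_firstn; unfold A; lia).
      rewrite firstn_app_2; simpl; rewrite app_nil_r; auto. }
    rewrite firstn_firstn in H1. replace (Nat.min A L') with A in H1 by lia.
    rewrite (firstn_min x L) in H1. fold A in H1.
    apply firstn_eq_mlen in H1; try lia. all: unfold A in *; try lia. rewrite mlen_sym; auto.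
  - intros [HAB Hm]. set (A := Nat.min L (length x)) in *.
    exists (skipn A (firstn L' y)).
    assert (H1 : firstn A (firstn L' y) = firstn L x).
    { rewrite firstn_firstn. replace (Nat.min A L') with A by lia.
      pose proof (mlen_le_r x y).
      rewrite (firstn_min x L); fold A. symmetry; apply firstn_eq_mlen; unfold A in *; try lia. }
    rewrite <- H1, firstn_skipn; auto.
Qed.

(** * Shape equivalence *)

Definition shape_eq (env env' : list elt) : Prop :=
  length env = length env' /\
  forall i j, piX (nth i env []) = piX (nth i env' []) /\
    mlen (nth i env []) (nth j env []) = mlen (nth i env' []) (nth j env' []).

Lemma shape_eq_sym env env' : shape_eq env env' -> shape_eq env' env.
Proof.
  intros [Hl Hs]; split; auto. intros i j; destruct (Hs i j); split; auto.
Qed.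

Lemma len_piX x : length (piX x) = length x.
Proof. unfold piX; apply length_map. Qed.

Lemma len_of_piX x y : piX x = piX y -> length x = length y.
Proof. intros H; rewrite <- len_piX, H, len_piX; auto. Qed.

Lemma piX_firstn L x : piX (firstn L x) = firstn L (piX x).
Proof. unfold piX; rewrite firstn_map; auto. Qed.

Lemma piX_app x y : piX (x ++ y) = piX x ++ piX y.
Proof. unfold piX; apply map_app. Qed.

Lemma tev_shape env env' t : shape_eq env env' ->
  exists i L, tev env t = firstn L (nth i env []) /\ tev env' t = firstn L (nth i env' []).
Proof.
  intros [Hl Hs]. induction t as [i| |t IHt u IHu|t IHt].
  - exists i, (length (nth i env [])). simpl. rewrite firstn_all.
    destruct (Hs i i) as [Hp _]. rewrite (len_of_piX _ _ Hp), firstn_all; auto.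
  - exists 0, 0; simpl; auto.
  - destruct IHt as [i [L [H1 H2]]], IHu as [j [L' [H3 H4]]].
    exists i, (Nat.min (Nat.min L L') (mlen (nth i env []) (nth j env []))).
    simpl; rewrite H1, H2, H3, H4, !meet_firstn2.
    destruct (Hs i j) as [_ Hm]; rewrite Hm; auto.
  - destruct IHt as [i [L [H1 H2]]].
    exists i, (Nat.pred (Nat.min L (length (nth i env [])))).
    simpl; unfold predE; rewrite H1, H2, !removelast_firstn_len, !length_firstn, !firstn_firstn.
    destruct (Hs i i) as [Hp _]. rewrite (len_of_piX _ _ Hp).
    split; f_equal; lia.
Qed.

Fixpoint qdepth (phi : form) : nat :=
  match phi with
  | FEq _ _ | FLe _ _ | FP _ _ => 0
  | FNot p => qdepth p
  | FAnd p q => Nat.max (qdepth p) (qdepth q)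
  | FEx p => S (qdepth p)
  end.

Lemma sat_atomic_shape Gam lam n n' env env' t u :
  shape_eq env env' ->
  (sat Gam lam n env (FEq t u) <-> sat Gam lam n' env' (FEq t u)) /\
  (sat Gam lam n env (FLe t u) <-> sat Gam lam n' env' (FLe t u)) /\
  (forall sg, sat Gam lam n env (FP sg t) <-> sat Gam lam n' env' (FP sg t)).
Proof.
  intros Hs. pose proof Hs as [_ Hs'].
  destruct (tev_shape _ _ t Hs) as [i [L [H1 H2]]].
  destruct (tev_shape _ _ u Hs) as [j [L' [H3 H4]]].
  destruct (Hs' i j) as [Hp Hm]; destruct (Hs' j j) as [Hp' _].
  simpl; rewrite H1, H2, H3, H4, !firstn_eq_iff, !leE_iff, !piX_firstn, Hp, Hm,
    (len_of_piX _ _ Hp), (len_of_piX _ _ Hp').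
  split; [|split]; tauto.
Qed.

(** * The back-and-forth step *)

Definition entry0 : nat * option nat := (0, None).

Lemma fst_nth x k : fst (nth k x entry0) = nth k (piX x) 0.
Proof. unfold piX. change 0 with (fst entry0). rewrite map_nth; auto. Qed.

Lemma entry_eq (u v : nat * option nat) : fst u = fst v -> snd u = snd v -> u = v.
Proof. destruct u, v; simpl; intros; subst; auto. Qed.

Lemma in_nth_env (env : list elt) i : nth i env [] <> [] -> In (nth i env []) env.
Proof.
  intros H. destruct (Nat.lt_ge_cases i (length env)).
  - apply nth_In; auto.
  - rewrite nth_overflow in H by auto; congruence.
Qed.

Lemma valid_none Gam lam n x k :
  in_GammaX Gam lam n x -> k < length x -> lam (firstn (S k) (piX x)) = false ->
  snd (nth k x entry0) = None.
Proof.
  intros [_ H] Hk Hl. specialize (H k Hk). unfold entry0, piX in *.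
  destruct (snd (nth k x (0, None))); auto. destruct H; congruence.
Qed.

Lemma argmax (f : nat -> nat) k : exists j, forall i, i < k -> f i <= f j.
Proof.
  induction k as [|k [j IH]].
  - exists 0; intros; lia.
  - destruct (Nat.le_ge_cases (f k) (f j)).
    + exists j; intros i Hi. destruct (Nat.eq_dec i k); subst; auto. apply IH; lia.
    + exists k; intros i Hi. destruct (Nat.eq_dec i k); subst; auto.
      specialize (IH i ltac:(lia)); lia.
Qed.

(* An index maximising the meet of a with the environment, extended by
   zeros beyond the length of env. *)
Lemma argmax_mlen a (env : list elt) :
  exists j, forall i, mlen a (nth i env []) <= mlen a (nth j env []).
Proof.
  destruct (argmax (fun i => mlen a (nth i env [])) (length env)) as [j Hj].
  exists j. intros i. destruct (Nat.lt_ge_cases i (length env)); auto.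
  rewrite nth_overflow, mlen_nil_r by auto; lia.
Qed.

Lemma shape_eq_cons env env' a a' j :
  shape_eq env env' ->
  (forall i, mlen a (nth i env []) <= mlen a (nth j env [])) ->
  piX a' = piX a ->
  firstn (mlen a (nth j env [])) a' = firstn (mlen a (nth j env [])) (nth j env' []) ->
  (forall i, mlen a (nth j env []) <= mlen (nth j env' []) (nth i env' []) ->
     mlen a (nth j env []) < length a' -> mlen a (nth j env []) < length (nth i env' []) ->
     nth (mlen a (nth j env [])) a' entry0 <> nth (mlen a (nth j env [])) (nth i env' []) entry0) ->
  shape_eq (a :: env) (a' :: env').
Proof.
  intros [Hl Hs] Hmax Hp Hf Hdiv.
  set (L := mlen a (nth j env [])) in *.
  assert (Haa : length a' = length a) by (apply len_of_piX; auto).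
  assert (HLa : L <= length a) by apply mlen_le_l.
  assert (HLj : L <= length (nth j env [])) by apply mlen_le_r.
  assert (Hjj : length (nth j env []) = length (nth j env' [])).
  { apply len_of_piX; apply (Hs j j). }
  assert (Hfa : firstn L a = firstn L (nth j env [])) by (apply firstn_eq_mlen; lia).
  assert (Key : forall i, mlen a' (nth i env' []) = mlen a (nth i env [])).
  { intros i.
    pose proof (mlen_agree a (nth j env []) (nth i env []) L Hfa HLa HLj) as U1.
    pose proof (mlen_agree a' (nth j env' []) (nth i env' []) L Hf ltac:(lia) ltac:(lia)) as U2.
    destruct (Hs j i) as [_ Hm].
    specialize (Hmax i).
    destruct (Nat.lt_ge_cases (mlen (nth j env []) (nth i env [])) L) as [HM|HM].
    - lia.
    - assert (E1 : mlen a (nth i env []) = L) by lia.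
      rewrite E1. destruct (Nat.lt_ge_cases L (mlen a' (nth i env' []))) as [H|H]; [|lia].
      destruct (mlen_gt_nth _ _ _ entry0 H) as [H1 [H2 H3]].
      exfalso; apply (Hdiv i); auto; lia. }
  split; [simpl; auto|].
  intros [|i] [|k]; simpl.
  - split; [auto|]. rewrite !mlen_refl; auto.
  - split; [auto|]. symmetry; apply Key.
  - split; [apply (Hs i 0)|]. rewrite (mlen_sym _ a), (mlen_sym _ a'). symmetry; apply Key.
  - apply Hs.
Qed.

Definition lab_of (e : elt) (p : nat) : option nat := snd (nth p e entry0).

Definition fresh_label (env' : list elt) (n' p : nat) : nat :=
  hd 1 (filter (fun x => negb (existsb (fun e => match lab_of e p with
                                                  | Some y => Nat.eqb y x | None => false end) env'))
          (seq 1 n')).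

(* Fewer than n' entries cannot use all n' labels. *)
Lemma fresh_label_spec env' n' p : length env' < n' ->
  1 <= fresh_label env' n' p <= n' /\
  forall e, In e env' -> lab_of e p <> Some (fresh_label env' n' p).
Proof.
  intros Hn. unfold fresh_label.
  set (g := fun x => negb (existsb (fun e => match lab_of e p with
                                                  | Some y => Nat.eqb y x | None => false end) env')).
  destruct (filter g (seq 1 n')) as [|x r] eqn:Ef.
  - exfalso.
    assert (Hinc : incl (map Some (seq 1 n')) (map (fun e => lab_of e p) env')).
    { intros o Ho. apply in_map_iff in Ho as [x [<- Hx]].
      assert (Hg : g x = false).
      { destruct (g x) eqn:E; auto. assert (In x (filter g (seq 1 n'))) by (apply filter_In; auto).
        rewrite Ef in H; destruct H. }
      unfold g in Hg. apply Bool.negb_false_iff, existsb_exists in Hg as [e [He Hx']].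
      apply in_map_iff. exists e; split; auto.
      destruct (lab_of e p); try discriminate. apply Nat.eqb_eq in Hx'; subst; auto. }
    apply NoDup_incl_length in Hinc.
    + rewrite !length_map, length_seq in Hinc; lia.
    + apply FinFun.Injective_map_NoDup; [intros u v H; inversion H; auto|apply seq_NoDup].
  - simpl. assert (Hx : In x (filter g (seq 1 n'))) by (rewrite Ef; left; auto).
    apply filter_In in Hx as [Hx Hg]. apply in_seq in Hx.
    split; [lia|]. intros e He Hl.
    unfold g in Hg. apply Bool.negb_true_iff in Hg.
    assert (existsb (fun e0 => match lab_of e0 p with Some y => Nat.eqb y x | None => false end) env' = true).
    { apply existsb_exists. exists e; split; auto. rewrite Hl. apply Nat.eqb_refl. }
    congruence.
Qed.

Fixpoint label_seq (lab : nat -> option nat) (s : list nat) (p : nat) : elt :=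
  match s with [] => [] | x :: r => (x, lab p) :: label_seq lab r (S p) end.

Lemma label_seq_piX lab s p : piX (label_seq lab s p) = s.
Proof. unfold piX; revert p; induction s; simpl; intros; f_equal; auto. Qed.

Lemma label_seq_nth lab s p i : i < length s ->
  nth i (label_seq lab s p) entry0 = (nth i s 0, lab (p + i)).
Proof.
  revert p i; induction s as [|x s IH]; intros p i Hi; simpl in *; [lia|].
  destruct i; simpl. f_equal; f_equal; lia.
  rewrite IH by lia. f_equal; f_equal; lia.
Qed.

Definition fresh_labels (lam : list nat -> bool) (sg : list nat) (env' : list elt) (n' q : nat)
  : option nat :=
  if lam (firstn (S q) sg) then Some (fresh_label env' n' q) else None.

(* The answer to a in the back-and-forth game: copy the first L entries of e'
   and continue along sg with fresh labels. *)
Definition extension (lam : list nat -> bool) (env' : list elt) (n' : nat)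
  (sg : list nat) (e' : elt) (L : nat) : elt :=
  firstn L e' ++ label_seq (fresh_labels lam sg env' n') (skipn L sg) L.

Section Extension.

Variables (Gam : list (list nat)) (lam : list nat -> bool) (n n' : nat).
Variables (env env' : list elt) (a : elt) (j : nat).
Hypothesis Hsh : shape_eq env env'.
Hypothesis Hn : length env' < n'.
Hypothesis Hv : Forall (in_GammaX Gam lam n) env.
Hypothesis Hv' : Forall (in_GammaX Gam lam n') env'.
Hypothesis Ha : in_GammaX Gam lam n a.
Hypothesis Hmax : forall i, mlen a (nth i env []) <= mlen a (nth j env []).

Let L := mlen a (nth j env []).
Let a' := extension lam env' n' (piX a) (nth j env' []) L.

Let HLa : L <= length a := mlen_le_l _ _.
Let HLj : L <= length (nth j env []) := mlen_le_r _ _.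

Lemma extension_len_j : length (nth j env []) = length (nth j env' []).
Proof. apply len_of_piX, (proj2 Hsh j j). Qed.

Lemma extension_agree_j : firstn L a = firstn L (nth j env []).
Proof. apply firstn_eq_mlen; auto. Qed.

Lemma extension_prefix_len : length (firstn L (nth j env' [])) = L.
Proof. apply firstn_length_le. rewrite <- extension_len_j; auto. Qed.

Lemma extension_prefix : firstn L a' = firstn L (nth j env' []).
Proof.
  unfold a', extension.
  rewrite firstn_app, extension_prefix_len, Nat.sub_diag, firstn_firstn, Nat.min_id.
  simpl; rewrite app_nil_r; auto.
Qed.

Lemma extension_piX : piX a' = piX a.
Proof.
  unfold a', extension. rewrite piX_app, label_seq_piX, piX_firstn.
  rewrite <- (proj1 (proj2 Hsh j j)), <- piX_firstn, <- extension_agree_j, piX_firstn.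
  apply firstn_skipn.
Qed.

Lemma extension_len : length a' = length a.
Proof. apply len_of_piX, extension_piX. Qed.

Lemma extension_nth_high k : L <= k -> k < length a ->
  nth k a' entry0 = (nth k (piX a) 0, fresh_labels lam (piX a) env' n' k).
Proof.
  intros H1 H2. unfold a', extension. rewrite app_nth2 by (rewrite extension_prefix_len; lia).
  rewrite extension_prefix_len, label_seq_nth by (rewrite length_skipn, len_piX; lia).
  rewrite nth_skipn. f_equal; f_equal; lia.
Qed.

Lemma extension_valid : in_GammaX Gam lam n' a'.
Proof.
  split.
  - fold (piX a'). rewrite extension_piX. apply Ha.
  - intros k Hk. fold (piX a'). rewrite extension_piX.
    destruct (Nat.lt_ge_cases k L) as [HkL|HkL].
    + assert (Hnk : nth k a' entry0 = nth k (nth j env' []) entry0).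
      { unfold a', extension. rewrite app_nth1 by (rewrite extension_prefix_len; lia).
        rewrite nth_firstn. destruct (Nat.ltb_spec k L); [auto|lia]. }
      assert (Hin : In (nth j env' []) env').
      { apply in_nth_env. intros E. pose proof extension_len_j as Hjj. rewrite E in Hjj.
        simpl in Hjj; lia. }
      pose proof HLj; pose proof extension_len_j.
      assert (Hv1 := proj2 (proj1 (Forall_forall _ _) Hv' _ Hin) k ltac:(lia)).
      unfold entry0 in Hnk; rewrite Hnk.
      assert (E : firstn (S k) (map fst (nth j env' [])) = firstn (S k) (piX a)).
      { fold (piX (nth j env' [])). replace (S k) with (Nat.min (S k) L) by lia.
        rewrite <- !firstn_firstn, <- piX_firstn, <- extension_prefix, piX_firstn,
          extension_piX; auto. }
      rewrite <- E; auto.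
    + rewrite extension_len in Hk. change (nth k a' (0, None)) with (nth k a' entry0).
      rewrite extension_nth_high by lia. simpl.
      unfold fresh_labels. destruct (lam (firstn (S k) (piX a))) eqn:El; auto.
      split; auto. apply fresh_label_spec; lia.
Qed.

(* Position L separates the answer from every entry of env' that follows
   the j-th one up to L: at an infinity-node by freshness of the label, at a
   1-node because otherwise a itself would meet some entry of env beyond L. *)
Lemma extension_diverges i :
  L <= mlen (nth j env' []) (nth i env' []) -> L < length a' -> L < length (nth i env' []) ->
  nth L a' entry0 <> nth L (nth i env' []) entry0.
Proof.
  intros HM H1 H2 Heq.
  rewrite extension_len in H1. rewrite extension_nth_high in Heq by lia.
  set (ei := nth i env []) in *. set (ei' := nth i env' []) in *.
  assert (Hpi : piX ei = piX ei') by apply (proj2 Hsh i i).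
  assert (Hii : length ei = length ei') by (apply len_of_piX; auto).
  assert (Hin' : In ei' env')
    by (apply in_nth_env; intros E; unfold ei' in H2; rewrite E in H2; simpl in H2; lia).
  assert (Hin : In ei env)
    by (apply in_nth_env; intros E; unfold ei in Hii; rewrite E in Hii; simpl in Hii; lia).
  unfold fresh_labels in Heq. destruct (lam (firstn (S L) (piX a))) eqn:El.
  - destruct (fresh_label_spec env' n' L Hn) as [_ Hf]. apply (Hf ei' Hin').
    unfold lab_of. rewrite <- Heq; auto.
  - assert (Hm : mlen (nth j env []) ei = mlen (nth j env' []) ei') by apply (proj2 Hsh j i).
    assert (Hfi : firstn L ei = firstn L (nth j env [])).
    { apply firstn_eq_mlen; try lia. rewrite mlen_sym; lia. }
    assert (Hfi' : firstn L a' = firstn L ei').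
    { rewrite extension_prefix. apply firstn_eq_mlen; try lia.
      rewrite <- extension_len_j; auto. }
    assert (HS' : firstn (S L) a' = firstn (S L) ei').
    { rewrite (firstn_S_nth a' L entry0), (firstn_S_nth ei' L entry0) by (rewrite ?extension_len; lia).
      rewrite Hfi', <- Heq, extension_nth_high by lia. unfold fresh_labels; rewrite El; auto. }
    assert (HpS : firstn (S L) (piX ei) = firstn (S L) (piX a)).
    { rewrite Hpi, <- piX_firstn, <- HS', piX_firstn, extension_piX; auto. }
    assert (Hn1 : snd (nth L ei entry0) = None).
    { apply (valid_none Gam lam n); [apply (proj1 (Forall_forall _ _) Hv _ Hin)|lia|].
      rewrite HpS; auto. }
    assert (Hn2 : snd (nth L a entry0) = None) by (apply (valid_none Gam lam n); auto; lia).
    assert (Heq2 : nth L a entry0 = nth L ei entry0).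
    { assert (Hf1 : fst (nth L ei entry0) = nth L (piX a) 0)
        by (rewrite fst_nth, Hpi, <- fst_nth, <- Heq; auto).
      apply entry_eq; [rewrite fst_nth, Hf1; auto|congruence]. }
    assert (HS : firstn (S L) a = firstn (S L) ei).
    { rewrite (firstn_S_nth a L entry0), (firstn_S_nth ei L entry0) by lia.
      rewrite Heq2, extension_agree_j, Hfi; auto. }
    apply firstn_eq_mlen in HS; try lia.
    specialize (Hmax i). fold ei L in Hmax. lia.
Qed.

Lemma shape_eq_extension : shape_eq (a :: env) (a' :: env').
Proof.
  apply (shape_eq_cons env env' a a' j Hsh Hmax extension_piX extension_prefix).
  intros i; apply extension_diverges.
Qed.

End Extension.

Lemma shape_eq_extend Gam lam n n' env env' a :
  shape_eq env env' -> length env' < n' ->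
  Forall (in_GammaX Gam lam n) env -> Forall (in_GammaX Gam lam n') env' ->
  in_GammaX Gam lam n a ->
  exists a', in_GammaX Gam lam n' a' /\ shape_eq (a :: env) (a' :: env').
Proof.
  intros Hsh Hn Hv Hv' Ha. destruct (argmax_mlen a env) as [j Hmax].
  eexists; split.
  - apply (extension_valid Gam lam n n' env env' a j Hsh Hn Hv' Ha).
  - apply (shape_eq_extension Gam lam n n' env env' a j Hsh Hn Hv Ha Hmax).
Qed.

Lemma sat_shape_eq Gam lam phi : forall n n' env env',
  shape_eq env env' -> length env + qdepth phi < n -> length env' + qdepth phi < n' ->
  Forall (in_GammaX Gam lam n) env -> Forall (in_GammaX Gam lam n') env' ->
  (sat Gam lam n env phi <-> sat Gam lam n' env' phi).
Proof.
  induction phi as [t u|t u|sg t|p IH|p IHp q IHq|p IH]; intros n n' env env' Hs H1 H2 V1 V2.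
  - apply (sat_atomic_shape Gam lam n n' env env' t u Hs).
  - apply (sat_atomic_shape Gam lam n n' env env' t u Hs).
  - apply (sat_atomic_shape Gam lam n n' env env' t t Hs).
  - simpl in *. rewrite (IH n n' env env'); tauto.
  - simpl in *. rewrite (IHp n n' env env'), (IHq n n' env env'); auto; try tauto; lia.
  - simpl in *. split.
    + intros [a [Ha Hsat]].
      destruct (shape_eq_extend Gam lam n n' env env' a Hs ltac:(lia) V1 V2 Ha) as [a' [Ha' Hs']].
      exists a'; split; auto. apply (proj1 (IH n n' (a :: env) (a' :: env') Hs' ltac:(simpl; lia)
                     ltac:(simpl; lia) (Forall_cons _ Ha V1) (Forall_cons _ Ha' V2))); auto.
    + intros [a' [Ha' Hsat]].
      destruct (shape_eq_extend Gam lam n' n env' env a' (shape_eq_sym _ _ Hs)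
                  ltac:(destruct Hs; lia) V2 V1 Ha') as [a [Ha Hs']].
      exists a; split; auto. apply (proj2 (IH n n' (a :: env) (a' :: env') (shape_eq_sym _ _ Hs')
                     ltac:(simpl; lia) ltac:(simpl; lia) (Forall_cons _ Ha V1) (Forall_cons _ Ha' V2))); auto.
Qed.

(** * Finite cardinalities *)

Lemma hc_list {T} (l : list T) : NoDup l -> has_card (fun x => In x l) (length l).
Proof. intros H; exists l; repeat split; auto. Qed.

Lemma hc_ext {T} (P Q : T -> Prop) c : (forall x, P x <-> Q x) -> has_card P c -> has_card Q c.
Proof. intros H [l [H1 [H2 H3]]]; exists l; repeat split; auto; intros Hx;
  [apply H, H3; auto | apply H3, H; auto]. Qed.

Lemma hc_le {T} (P Q : T -> Prop) c d : (forall x, P x -> Q x) -> has_card P c -> has_card Q d -> c <= d.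
Proof.
  intros H [l [H1 [H2 H3]]] [l' [H1' [H2' H3']]]. subst.
  apply NoDup_incl_length; auto. intros x Hx. apply H3', H, H3; auto.
Qed.

Lemma hc_unique {T} (P : T -> Prop) c d : has_card P c -> has_card P d -> c = d.
Proof. intros H1 H2; apply Nat.le_antisymm; eapply hc_le; eauto. Qed.

Lemma hc_exists {T} (dec : forall x y : T, {x = y} + {x <> y}) (P : T -> Prop) l :
  (forall x, P x -> In x l) -> exists c, has_card P c.
Proof.
  intros H.
  set (l' := filter (fun x => if excluded_middle_informative (P x) then true else false) (nodup dec l)).
  exists (length l'), l'. repeat split; auto.
  - apply NoDup_filter, NoDup_nodup.
  - unfold l'; rewrite filter_In. destruct (excluded_middle_informative (P x)); intuition discriminate.
  - intros Hx. unfold l'; apply filter_In. split; [apply nodup_In; auto|].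
    destruct (excluded_middle_informative (P x)); auto.
Qed.

Lemma hc_image {T U} (f : T -> U) (P : T -> Prop) c :
  (forall x y, f x = f y -> x = y) -> has_card P c -> has_card (fun y => exists x, P x /\ y = f x) c.
Proof.
  intros Hi [l [H1 [H2 H3]]]. exists (map f l). repeat split.
  - apply FinFun.Injective_map_NoDup; auto.
  - rewrite length_map; auto.
  - intros Hy. apply in_map_iff in Hy as [z [<- Hz]]. exists z; split; auto; apply H3; auto.
  - intros [z [Hz ->]]. apply in_map; apply H3; auto.
Qed.

Lemma hc_union {T} (P Q : T -> Prop) c d :
  has_card P c -> has_card Q d -> (forall x, P x -> Q x -> False) ->
  has_card (fun x => P x \/ Q x) (c + d).
Proof.
  intros [l [H1 [H2 H3]]] [l' [H1' [H2' H3']]] Hd. exists (l ++ l'). repeat split.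
  - apply NoDup_app; auto. intros a Ha Ha'. apply (Hd a); [apply H3|apply H3']; auto.
  - rewrite length_app; lia.
  - intros Hx. apply in_app_or in Hx as [Hx|Hx]; [left; apply H3|right; apply H3']; auto.
  - intros [Hx|Hx]; apply in_or_app; [left; apply H3|right; apply H3']; auto.
Qed.

Lemma hc_empty {T} (P : T -> Prop) : (forall x, ~ P x) -> has_card P 0.
Proof. intros H; exists []; repeat split; simpl; auto using NoDup_nil; intros Hx; [destruct Hx|exfalso; eapply H; eauto]. Qed.

Fixpoint prods {A} (ls : list (list A)) : list (list A) :=
  match ls with [] => [[]] | c :: r => flat_map (fun x => map (cons x) (prods r)) c end.

Lemma in_prods {A} (ls : list (list A)) s : In s (prods ls) <-> Forall2 (fun x c => In x c) s ls.
Proof.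
  revert s; induction ls as [|c r IH]; intros s; simpl.
  - split; [intros [<-|[]]; constructor| intros H; inversion H; auto].
  - rewrite in_flat_map. split.
    + intros [x [Hx Hs]]. apply in_map_iff in Hs as [t [<- Ht]]. constructor; auto. apply IH; auto.
    + intros H; inversion H; subst. exists x; split; auto. apply in_map. apply IH; auto.
Qed.

Lemma nodup_prods {A} (ls : list (list A)) : Forall (@NoDup A) ls -> NoDup (prods ls).
Proof.
  induction ls as [|c r IH]; intros H; simpl.
  - constructor; auto; constructor.
  - inversion H as [|? ? Hc Hr]; subst. specialize (IH Hr).
    induction Hc as [|x c Hx Hc IHc]; simpl; [constructor|].
    apply NoDup_app.
    + apply FinFun.Injective_map_NoDup; auto. intros u v E; inversion E; auto.
    + apply IHc. constructor; auto.
    + intros s Hs Hs'. apply in_map_iff in Hs as [t [<- _]].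
      apply in_flat_map in Hs' as [y [Hy Hs']]. apply in_map_iff in Hs' as [t' [E _]].
      inversion E; subst; auto.
Qed.

Definition prod_list (l : list nat) : nat := fold_right Nat.mul 1 l.

Lemma length_prods {A} (ls : list (list A)) : length (prods ls) = prod_list (map (@length A) ls).
Proof.
  induction ls as [|c r IH]; simpl; auto.
  rewrite (flat_map_constant_length (c := length (prods r))); [rewrite IH; auto|].
  intros; rewrite length_map; auto.
Qed.

Lemma hc_prods {A} (ls : list (list A)) : Forall (@NoDup A) ls ->
  has_card (fun s => Forall2 (fun x c => In x c) s ls) (prod_list (map (@length A) ls)).
Proof.
  intros H. rewrite <- length_prods. eapply hc_ext; [|apply hc_list, nodup_prods; auto].
  intros; apply in_prods.
Qed.

Lemma Forall2_map_seq {A B} (R : A -> B -> Prop) (f : nat -> B) s p h d :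
  Forall2 R s (map f (seq p h)) <-> length s = h /\ forall k, k < h -> R (nth k s d) (f (p + k)).
Proof.
  revert p h; induction s as [|x s IH]; intros p h.
  - destruct h; simpl; split.
    + intros _; split; auto; intros; lia.
    + constructor.
    + intros H; inversion H.
    + intros [H _]; discriminate.
  - destruct h; simpl; split.
    + intros H; inversion H.
    + intros [H _]; discriminate.
    + intros H; inversion H; subst. apply IH in H5 as [Hl Hk]. split; auto.
      intros [|k] Hk'; simpl. rewrite Nat.add_0_r; auto.
      replace (p + S k) with (S p + k) by lia. apply Hk; lia.
    + intros [Hl Hk]. constructor.
      * specialize (Hk 0 ltac:(lia)); simpl in Hk; rewrite Nat.add_0_r in Hk; auto.
      * apply IH. split; [lia|]. intros k Hk'. specialize (Hk (S k) ltac:(lia)); simpl in Hk.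
        replace (S p + k) with (p + S k) by lia; auto.
Qed.

(** * Fibres of the projection to Gam *)

Definition choices (lam : list nat -> bool) (n : nat) (sg : list nat) (k : nat) : list (nat * option nat) :=
  if lam (firstn (S k) sg) then map (fun x => (nth k sg 0, Some x)) (seq 1 n)
  else [(nth k sg 0, None)].

Definition labcond (lam : list nat -> bool) (n : nat) (sg : list nat) (k : nat) (o : option nat) : Prop :=
  match o with
  | None => lam (firstn (S k) sg) = false
  | Some x => lam (firstn (S k) sg) = true /\ (1 <= x <= n)
  end.

Lemma in_choices lam n sg k e :
  In e (choices lam n sg k) <-> fst e = nth k sg 0 /\ labcond lam n sg k (snd e).
Proof.
  unfold choices, labcond. destruct e as [i o]; cbn [fst snd].
  destruct (lam (firstn (S k) sg)) eqn:El.
  - rewrite in_map_iff. split.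
    + intros [x [E Hx]]. inversion E; subst. apply in_seq in Hx. split; auto; split; auto; lia.
    + intros [-> Ho]. destruct o as [x|]; [|discriminate]. exists x; split; auto.
      apply in_seq; lia.
  - simpl. split.
    + intros [E|[]]; inversion E; subst; auto.
    + intros [-> Ho]. destruct o; [destruct Ho; discriminate|]. left; auto.
Qed.

Lemma nodup_choices lam n sg k : NoDup (choices lam n sg k).
Proof.
  unfold choices; destruct (lam _).
  - apply FinFun.Injective_map_NoDup; [intros u v E; inversion E; auto|apply seq_NoDup].
  - constructor; auto; constructor.
Qed.

Lemma length_choices lam n sg k :
  length (choices lam n sg k) = if lam (firstn (S k) sg) then n else 1.
Proof. unfold choices; destruct (lam _); simpl; auto. rewrite length_map, length_seq; auto. Qed.

Definition choice_lists lam n sg p := map (choices lam n sg) (seq p (length sg - p)).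

Lemma in_GammaX_choices Gam lam n a :
  in_GammaX Gam lam n a <-> In (piX a) Gam /\ Forall2 (fun x c => In x c) a (choice_lists lam n (piX a) 0).
Proof.
  unfold choice_lists. rewrite (Forall2_map_seq _ _ _ _ _ entry0). rewrite len_piX, Nat.sub_0_r.
  unfold in_GammaX. split.
  - intros [H1 H2]. split; auto. split; auto. intros k Hk. apply in_choices.
    split; [apply fst_nth|]. specialize (H2 k Hk). unfold labcond, entry0 in *. simpl. auto.
  - intros [H1 [_ H2]]. split; auto. intros k Hk. specialize (H2 k Hk).
    apply in_choices in H2 as [_ H2]. unfold labcond, entry0 in *. simpl in *. auto.
Qed.

Lemma piX_of_choice_lists lam n sg p a :
  Forall2 (fun x c => In x c) a (choice_lists lam n sg p) -> piX a = skipn p sg.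
Proof.
  unfold choice_lists. rewrite (Forall2_map_seq _ _ _ _ _ entry0). intros [Hl Hk].
  apply nth_ext with (d := 0) (d' := 0).
  - rewrite len_piX, length_skipn; auto.
  - intros k Hk'. rewrite len_piX in Hk'. rewrite <- fst_nth, nth_skipn.
    specialize (Hk k ltac:(lia)). apply in_choices in Hk as [H _]; auto.
Qed.

Definition count_inf_from (lam : list nat -> bool) (sg : list nat) (p h : nat) : nat :=
  length (filter (fun k => lam (firstn k sg)) (seq (S p) h)).

(* Each infinity-node multiplies the number of choices by n. *)
Lemma prod_choice_lists lam n sg p h :
  prod_list (map (@length _) (map (choices lam n sg) (seq p h))) = n ^ count_inf_from lam sg p h.
Proof.
  revert p; induction h as [|h IH]; intros p; simpl; auto.
  rewrite length_choices, IH. unfold count_inf_from. cbn [seq filter].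
  destruct (lam (firstn (S p) sg)); cbn [length]; simpl Nat.pow; lia.
Qed.

Lemma choice_lists_nodup lam n sg p : Forall (@NoDup _) (choice_lists lam n sg p).
Proof. apply Forall_forall; intros c Hc. unfold choice_lists in Hc. apply in_map_iff in Hc as [k [<- _]].
  apply nodup_choices. Qed.

Lemma fiber_iff Gam lam n sg a : In sg Gam ->
  (in_GammaX Gam lam n a /\ piX a = sg <-> Forall2 (fun x c => In x c) a (choice_lists lam n sg 0)).
Proof.
  intros Hg. rewrite in_GammaX_choices. split.
  - intros [[_ H] <-]; auto.
  - intros H. assert (Hp : piX a = sg) by (rewrite (piX_of_choice_lists _ _ _ _ _ H); auto).
    rewrite Hp; auto.
Qed.

Lemma card_fiber Gam lam n sg : In sg Gam ->
  has_card (fun a => in_GammaX Gam lam n a /\ piX a = sg) (n ^ count_inf lam sg).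
Proof.
  intros Hg.
  assert (E : prod_list (map (@length _) (choice_lists lam n sg 0)) = n ^ count_inf lam sg).
  { unfold choice_lists; rewrite prod_choice_lists. unfold count_inf_from, count_inf; rewrite Nat.sub_0_r; auto. }
  rewrite <- E. eapply hc_ext; [|apply hc_prods, choice_lists_nodup].
  intros a; simpl; rewrite fiber_iff; auto; tauto.
Qed.

Definition enum_Gamma Gam lam n : list elt := flat_map (fun sg => prods (choice_lists lam n sg 0)) Gam.

Lemma enum_Gamma_complete Gam lam n a : in_GammaX Gam lam n a -> In a (enum_Gamma Gam lam n).
Proof.
  intros H. apply in_GammaX_choices in H as [H1 H2]. apply in_flat_map. exists (piX a); split; auto.
  apply in_prods; auto.
Qed.

Definition entry_eq_dec : forall a b : nat * option nat, {a = b} + {a <> b}.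
Proof. decide equality; [decide equality; apply Nat.eq_dec|apply Nat.eq_dec]. Defined.

Definition elt_eq_dec : forall a b : elt, {a = b} + {a <> b} := list_eq_dec entry_eq_dec.

Lemma has_card_Gamma_subset Gam lam n (P : elt -> Prop) :
  (forall a, P a -> in_GammaX Gam lam n a) -> exists c, has_card P c.
Proof.
  intros H. apply (hc_exists elt_eq_dec P (enum_Gamma Gam lam n)). intros a Ha; apply enum_Gamma_complete; auto.
Qed.
Local Open Scope nat_scope.

Lemma choice_lists_nth lam n sg p a :
  Forall2 (fun x c => In x c) a (choice_lists lam n sg p) <->
  length a = length sg - p /\ forall k, k < length sg - p -> In (nth k a entry0) (choices lam n sg (p + k)).
Proof. unfold choice_lists; apply Forall2_map_seq. Qed.

Lemma choice_lists_sub lam n sg p (g : nat -> list (nat * option nat)) a :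
  (forall k x, In x (g k) -> In x (choices lam n sg k)) ->
  Forall2 (fun x c => In x c) a (map g (seq p (length sg - p))) ->
  Forall2 (fun x c => In x c) a (choice_lists lam n sg p).
Proof.
  intros Hg H. apply (Forall2_map_seq _ _ _ _ _ entry0) in H as [H1 H2].
  apply choice_lists_nth; split; auto.
Qed.

Lemma filter_len_bound {T} (dec : forall x y : T, {x = y} + {x <> y}) (C F : list T) :
  NoDup C -> length C <= length (filter (fun x => if in_dec dec x F then false else true) C) + length F.
Proof.
  intros H. rewrite <- length_app. apply NoDup_incl_length; auto.
  intros x Hx. apply in_or_app. destruct (in_dec dec x F); [right; auto|left].
  apply filter_In; split; auto. destruct (in_dec dec x F); tauto.
Qed.

(** * Counting the realisations of a shape *)

(* Entries at position L of those members of b that follow bj up to L: a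
   new element continuing bj's prefix must avoid them to keep its shape. *)
Definition blocked_entries (b : list elt) (bj : elt) (L : nat) : list (nat * option nat) :=
  map (fun i => nth L (nth i b []) entry0)
    (filter (fun i => andb (L <=? mlen bj (nth i b [])) (L <? length (nth i b [])))
       (seq 0 (length b))).

Lemma blocked_entries_len b bj L : length (blocked_entries b bj L) <= length b.
Proof.
  unfold blocked_entries; rewrite length_map.
  rewrite <- (length_seq (length b) 0) at 2. apply filter_length_le.
Qed.

Definition avoid (F C : list (nat * option nat)) : list (nat * option nat) :=
  filter (fun x => if in_dec entry_eq_dec x F then false else true) C.

Section Realisations.

Variables (Gam : list (list nat)) (lam : list nat -> bool) (n : nat).
Variables (b : list elt) (a0 : elt) (j : nat).
Hypothesis Va0 : in_GammaX Gam lam n a0.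
Hypothesis Hmax : forall i, mlen a0 (nth i b []) <= mlen a0 (nth j b []).

(* The realisations of the shape of a0 over b all start with the prefix p
   of length L shared with the j-th entry of b and then follow sg. *)
Let L := mlen a0 (nth j b []).
Let sg := piX a0.
Let p := firstn L (nth j b []).
Let realises (a : elt) : Prop := in_GammaX Gam lam n a /\ shape_eq (a :: b) (a0 :: b).
Let e := count_inf_from lam sg L (length sg - L).

Lemma realisation_prefix_len : length p = L.
Proof. apply firstn_length_le, mlen_le_r. Qed.

Lemma realisation_prefix_a0 : firstn L a0 = p.
Proof. apply firstn_eq_mlen; [apply mlen_le_l|apply mlen_le_r|fold L; lia]. Qed.

Lemma realisation_choices_a0 k :
  k < length sg -> In (nth k a0 entry0) (choices lam n sg k).
Proof.
  intros Hk. apply in_GammaX_choices in Va0 as [_ Hc].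
  apply choice_lists_nth in Hc as [_ Hc]. rewrite Nat.sub_0_r in Hc. apply (Hc k Hk).
Qed.

(* Upper bound: a realisation is p followed by free choices beyond L. *)
Lemma realisations_upper t : has_card realises t -> t <= n ^ e.
Proof.
  intros Ht.
  assert (Hc := hc_image (fun s => p ++ s) _ _ ltac:(intros x y E; eapply app_inv_head; eauto)
                  (hc_prods (choice_lists lam n sg L) (choice_lists_nodup lam n sg L))).
  unfold choice_lists in Hc at 2. rewrite prod_choice_lists in Hc.
  eapply hc_le; [|exact Ht|exact Hc]. simpl.
  intros a [Va Hs]. destruct Hs as [_ Hs].
  destruct (Hs 0 0) as [Hpa _]. simpl in Hpa. fold sg in Hpa.
  destruct (Hs 0 (S j)) as [_ Hm]. simpl in Hm.
  assert (Hla : length a = length a0) by (apply len_of_piX; auto).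
  pose proof (mlen_le_l a0 (nth j b [])) as HLa.
  assert (Hfa' : firstn L a = p).
  { apply firstn_eq_mlen; [lia|apply mlen_le_r|rewrite Hm; auto]. }
  exists (skipn L a). split.
  - apply choice_lists_nth. apply in_GammaX_choices in Va as [_ Va]. rewrite Hpa in Va.
    apply choice_lists_nth in Va as [Hl Hk]. rewrite Nat.sub_0_r in *. split.
    + rewrite length_skipn; lia.
    + intros k Hk'. rewrite nth_skipn. apply Hk. lia.
  - rewrite <- Hfa', firstn_skipn; auto.
Qed.

(* Lower bound: at position L avoid the entries of b that would extend the
   meet with b; elsewhere choose freely. *)
Let blocked := blocked_entries b (nth j b []) L.
Let allowed (k : nat) : list (nat * option nat) :=
  if Nat.eqb k L then avoid blocked (choices lam n sg k) else choices lam n sg k.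

Lemma allowed_sub k x : In x (allowed k) -> In x (choices lam n sg k).
Proof.
  unfold allowed; destruct (Nat.eqb k L); auto. intros H; apply filter_In in H; tauto.
Qed.

Lemma allowed_nodup : Forall (@NoDup _) (map allowed (seq L (length sg - L))).
Proof.
  apply Forall_forall; intros c Hc; apply in_map_iff in Hc as [k [<- _]]. unfold allowed.
  destruct (Nat.eqb k L); [apply NoDup_filter|]; apply nodup_choices.
Qed.

Lemma allowed_realise s :
  Forall2 (fun x c => In x c) s (map allowed (seq L (length sg - L))) -> realises (p ++ s).
Proof.
  intros Hs.
  assert (Hs' := choice_lists_sub _ _ _ _ _ _ allowed_sub Hs).
  apply choice_lists_nth in Hs' as [Hls Hks].
  assert (Hpa : piX (p ++ s) = sg).
  { rewrite piX_app, (piX_of_choice_lists _ _ _ _ _ (proj2 (choice_lists_nth _ _ _ _ _) (conj Hls Hks))).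
    rewrite <- realisation_prefix_a0, piX_firstn. apply firstn_skipn. }
  assert (Hlsg : length sg = length a0) by apply len_piX.
  pose proof realisation_prefix_len as Hlp.
  pose proof (mlen_le_l a0 (nth j b [])) as HLa.
  split.
  - apply in_GammaX_choices. rewrite Hpa. split; [apply Va0|].
    apply choice_lists_nth. rewrite Nat.sub_0_r, length_app. split; [lia|].
    intros k Hk. simpl. destruct (Nat.lt_ge_cases k L).
    + rewrite app_nth1 by lia. rewrite <- realisation_prefix_a0, nth_firstn.
      destruct (Nat.ltb_spec k L); [|lia]. apply realisation_choices_a0; lia.
    + rewrite app_nth2 by lia. rewrite Hlp. replace k with (L + (k - L)) at 2 by lia.
      apply Hks. lia.
  - apply shape_eq_sym, (shape_eq_cons b b a0 (p ++ s) j); auto.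
    + split; auto.
    + fold L. rewrite <- Hlp at 1.
      rewrite firstn_app, Nat.sub_diag, firstn_all; simpl; rewrite app_nil_r; auto.
    + fold L. intros i HM H1 H2 Heq.
      rewrite length_app in H1. rewrite app_nth2 in Heq by lia. rewrite Hlp, Nat.sub_diag in Heq.
      apply (Forall2_map_seq _ _ _ _ _ entry0) in Hs as [_ Hsk].
      specialize (Hsk 0 ltac:(lia)). rewrite Nat.add_0_r in Hsk.
      unfold allowed in Hsk. rewrite Nat.eqb_refl in Hsk. apply filter_In in Hsk as [_ Hn].
      destruct (in_dec entry_eq_dec (nth 0 s entry0) blocked) as [_|Hn']; [discriminate|].
      apply Hn'. rewrite Heq. apply (in_map (fun i => nth L (nth i b []) entry0)). apply filter_In.
      split.
      * apply in_seq. split; [lia|]. destruct (Nat.lt_ge_cases i (length b)); auto.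
        rewrite nth_overflow in H2 by auto; simpl in H2; lia.
      * apply andb_true_intro; split; [apply Nat.leb_le|apply Nat.ltb_lt]; auto.
Qed.

(* At a 1-node the unique entry of a0 at position L is never blocked:
   otherwise a0 would meet a member of b beyond L. *)
Lemma allowed_at_one_node :
  L < length sg -> 1 <= length (avoid blocked (choices lam n sg L)).
Proof.
  intros HLh. assert (Hlsg : length sg = length a0) by apply len_piX.
  destruct (avoid blocked (choices lam n sg L)) eqn:Ef; simpl; [|lia].
  exfalso. assert (Hin : In (nth L a0 entry0) (avoid blocked (choices lam n sg L))).
  2:{ rewrite Ef in Hin; destruct Hin. }
  apply filter_In; split; [apply realisation_choices_a0; lia|].
  destruct (in_dec entry_eq_dec (nth L a0 entry0) blocked) as [Hin|]; auto.
  apply in_map_iff in Hin as [i [Heq Hi]]. apply filter_In in Hi as [_ Hi].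
  apply andb_prop in Hi as [Hi1 Hi2]. apply Nat.leb_le in Hi1. apply Nat.ltb_lt in Hi2.
  assert (Hfi : firstn L (nth i b []) = p).
  { symmetry; apply firstn_eq_mlen; [apply mlen_le_r|lia|exact Hi1]. }
  assert (HS : firstn (S L) a0 = firstn (S L) (nth i b [])).
  { rewrite (firstn_S_nth a0 L entry0), (firstn_S_nth (nth i b []) L entry0)
      by lia.
    rewrite realisation_prefix_a0, Hfi, Heq; auto. }
  apply firstn_eq_mlen in HS; [|lia|lia].
  specialize (Hmax i). fold L in Hmax. lia.
Qed.

Lemma allowed_count :
  n ^ e * (n - length b) <= prod_list (map (@length _) (map allowed (seq L (length sg - L)))) * n.
Proof.
  unfold e. destruct (Nat.lt_ge_cases L (length sg)) as [HLh|HLh].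
  - replace (length sg - L) with (S (length sg - S L)) by lia. simpl.
    unfold allowed at 1. rewrite Nat.eqb_refl.
    rewrite (map_ext_in allowed (choices lam n sg)).
    2:{ intros k Hk. apply in_seq in Hk. unfold allowed. destruct (Nat.eqb_spec k L); auto; lia. }
    rewrite prod_choice_lists.
    set (e' := count_inf_from lam sg (S L) (length sg - S L)).
    assert (Ee : count_inf_from lam sg L (S (length sg - S L))
                 = (if lam (firstn (S L) sg) then 1 else 0) + e').
    { unfold count_inf_from, e'. cbn [seq filter]. destruct (lam (firstn (S L) sg)); simpl; auto. }
    rewrite Ee.
    assert (Hfb := filter_len_bound entry_eq_dec (choices lam n sg L) blocked (nodup_choices _ _ _ _)).
    fold (avoid blocked (choices lam n sg L)) in Hfb. rewrite length_choices in Hfb.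
    assert (Hbl : length blocked <= length b) by apply blocked_entries_len.
    destruct (lam (firstn (S L) sg)) eqn:El.
    + rewrite Nat.pow_add_r, Nat.pow_1_r.
      assert (n - length b <= length (avoid blocked (choices lam n sg L))) by lia.
      assert (n ^ e' * (n - length b) <= length (avoid blocked (choices lam n sg L)) * n ^ e')
        by (rewrite Nat.mul_comm; apply Nat.mul_le_mono_r; auto).
      nia.
    + pose proof (allowed_at_one_node HLh) as H1. simpl.
      transitivity (1 * n ^ e' * n).
      * rewrite Nat.mul_1_l. apply Nat.mul_le_mono_l; lia.
      * apply Nat.mul_le_mono_r, Nat.mul_le_mono_r; exact H1.
  - replace (length sg - L) with 0 by lia. unfold count_inf_from; simpl. nia.
Qed.

Lemma realisations_lower t : has_card realises t -> n ^ e * (n - length b) <= t * n.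
Proof.
  intros Ht.
  assert (Hc := hc_image (fun s => p ++ s) _ _ ltac:(intros x y E; eapply app_inv_head; eauto)
                  (hc_prods _ allowed_nodup)).
  assert (Hlow : prod_list (map (@length _) (map allowed (seq L (length sg - L)))) <= t).
  { eapply hc_le; [|exact Hc|exact Ht]. simpl. intros a [s [Hs ->]]. apply allowed_realise; auto. }
  pose proof allowed_count. nia.
Qed.

End Realisations.

(* A shape: a list of points of Gam and a matrix of meet lengths. *)
Definition shape := (list (list nat) * list (list nat))%type.

Definition shape_of (env : list elt) : shape :=
  (map piX env, map (fun x => map (mlen x) env) env).

Lemma nth_map_lt {A B} (f : A -> B) l i d d' : i < length l -> nth i (map f l) d = f (nth i l d').
Proof. intros H. rewrite (nth_indep _ d (f d')) by (rewrite length_map; auto). apply map_nth. Qed.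

Lemma shape_of_iff_nth env tau :
  length (fst tau) = length env -> length (snd tau) = length env ->
  (forall r, In r (snd tau) -> length r = length env) ->
  (shape_of env = tau <->
   (forall i, i < length env -> piX (nth i env []) = nth i (fst tau) []) /\
   (forall i j, i < length env -> j < length env ->
      mlen (nth i env []) (nth j env []) = nth j (nth i (snd tau) []) 0)).
Proof.
  destruct tau as [P M]; simpl. intros HP HM HR. unfold shape_of. split.
  - intros E; inversion E; subst. split.
    + intros i Hi. rewrite (nth_map_lt _ _ _ _ ([] : elt)) by auto; auto.
    + intros i j Hi Hj. rewrite (nth_map_lt _ _ _ _ ([] : elt)) by auto.
      rewrite (nth_map_lt _ _ _ _ ([] : elt)) by auto; auto.
  - intros [H1 H2]. f_equal.
    + apply nth_ext with (d := []) (d' := []); [rewrite length_map; auto|].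
      intros i Hi; rewrite length_map in Hi. rewrite (nth_map_lt _ _ _ _ ([] : elt)) by auto; auto.
    + apply nth_ext with (d := []) (d' := []); [rewrite length_map; auto|].
      intros i Hi; rewrite length_map in Hi. rewrite (nth_map_lt _ _ _ _ ([] : elt)) by auto.
      assert (Hr : length (nth i M []) = length env) by (apply HR, nth_In; lia).
      apply nth_ext with (d := 0) (d' := 0); [rewrite length_map; auto|].
      intros j Hj; rewrite length_map in Hj. rewrite (nth_map_lt _ _ _ _ ([] : elt)) by auto; auto.
Qed.

Lemma shape_of_iff env env' : length env = length env' -> (shape_of env = shape_of env' <-> shape_eq env env').
Proof.
  intros Hl. rewrite shape_of_iff_nth.
  2: unfold shape_of; simpl; rewrite length_map; auto.
  2: unfold shape_of; simpl; rewrite length_map; auto.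
  2:{ unfold shape_of; simpl. intros r Hr. apply in_map_iff in Hr as [x [<- _]]. rewrite length_map; auto. }
  unfold shape_of, shape_eq; simpl. split.
  - intros [H1 H2]. split; auto. intros i j.
    destruct (Nat.lt_ge_cases i (length env)) as [Hi|Hi].
    + split.
      * rewrite H1 by auto. rewrite (nth_map_lt _ _ _ _ ([] : elt)) by lia; auto.
      * destruct (Nat.lt_ge_cases j (length env)) as [Hj|Hj].
        -- rewrite H2 by auto. rewrite (nth_map_lt _ _ _ _ ([] : elt)) by lia.
           rewrite (nth_map_lt _ _ _ _ ([] : elt)) by lia; auto.
        -- rewrite (@nth_overflow _ env j []), (@nth_overflow _ env' j []) by lia. rewrite !mlen_nil_r; auto.
    + rewrite (@nth_overflow _ env i []), (@nth_overflow _ env' i []) by lia. split; auto.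
  - intros [_ H]. split.
    + intros i Hi. rewrite (nth_map_lt _ _ _ _ ([] : elt)) by lia. apply H. exact 0.
    + intros i j Hi Hj. rewrite (nth_map_lt _ _ _ _ ([] : elt)) by lia.
      rewrite (nth_map_lt _ _ _ _ ([] : elt)) by lia. apply H.
Qed.

Lemma Forall2_repeat {A} (s : list A) c k :
  Forall2 (fun x c => In x c) s (repeat c k) <-> length s = k /\ forall x, In x s -> In x c.
Proof.
  revert k; induction s as [|x s IH]; intros [|k]; simpl.
  - split; [intros; split; auto; intros _ []|constructor].
  - split; [intros H; inversion H|intros [H _]; discriminate].
  - split; [intros H; inversion H|intros [H _]; discriminate].
  - split.
    + intros H; inversion H; subst. apply IH in H5 as [Hl Hx]. split; auto.
      intros y [<-|Hy]; auto.
    + intros [Hl Hx]. constructor; auto. apply IH; split; auto.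
Qed.

Definition maxlen (Gam : list (list nat)) : nat := fold_right Nat.max 0 (map (@length nat) Gam).

Lemma fold_max_ge l x : In x l -> x <= fold_right Nat.max 0 l.
Proof. induction l; simpl; [intros []|intros [<-|H]; [lia|specialize (IHl H); lia]]. Qed.

Lemma fold_max_le l v : (forall x, In x l -> x <= v) -> fold_right Nat.max 0 l <= v.
Proof. induction l; simpl; intros H; [lia|]. specialize (IHl (fun x Hx => H x (or_intror Hx))).
  specialize (H a (or_introl eq_refl)); lia. Qed.

Definition shape_dec : forall x y : shape, {x = y} + {x <> y}.
Proof. repeat decide equality. Defined.

(* Every shape of an (m+1)-tuple consists of points of Gam and meet
   lengths at most maxlen Gam: finitely many candidates. *)
Definition shape_candidates (Gam : list (list nat)) (m : nat) : list shape :=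
  list_prod (prods (repeat Gam (S m)))
            (prods (repeat (prods (repeat (seq 0 (S (maxlen Gam))) (S m))) (S m))).

Definition all_shapes Gam m : list shape := nodup shape_dec (shape_candidates Gam m).

Lemma all_shapes_nodup Gam m : NoDup (all_shapes Gam m).
Proof. apply NoDup_nodup. Qed.

Lemma all_shapes_wf Gam m tau : In tau (all_shapes Gam m) ->
  length (fst tau) = S m /\ (forall sg, In sg (fst tau) -> In sg Gam) /\
  length (snd tau) = S m /\ (forall r, In r (snd tau) -> length r = S m).
Proof.
  unfold all_shapes. intros H. apply nodup_In in H. unfold shape_candidates in H. destruct tau as [P M].
  apply in_prod_iff in H as [H H'].
  apply in_prods, Forall2_repeat in H as [H1 H2]. apply in_prods, Forall2_repeat in H' as [H3 H4].
  simpl. repeat split; auto.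
  intros r Hr. specialize (H4 r Hr). apply in_prods, Forall2_repeat in H4. tauto.
Qed.

Lemma shape_of_in_all_shapes Gam lam n m env : length env = S m -> Forall (in_GammaX Gam lam n) env ->
  In (shape_of env) (all_shapes Gam m).
Proof.
  intros Hl Hv. unfold all_shapes. apply nodup_In. unfold shape_candidates, shape_of. apply in_prod_iff. split.
  - apply in_prods, Forall2_repeat. rewrite length_map; split; auto.
    intros sg Hsg. apply in_map_iff in Hsg as [x [<- Hx]].
    apply (proj1 (Forall_forall _ _) Hv x Hx).
  - apply in_prods, Forall2_repeat. rewrite length_map; split; auto.
    intros r Hr. apply in_map_iff in Hr as [x [<- Hx]].
    apply in_prods, Forall2_repeat. rewrite length_map; split; auto.
    intros k Hk. apply in_map_iff in Hk as [y [<- Hy]]. apply in_seq. split; [lia|].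
    assert (mlen x y <= length x) by apply mlen_le_l.
    assert (Hxin : In (piX x) Gam) by apply (proj1 (Forall_forall _ _) Hv x Hx).
    assert (length (piX x) <= maxlen Gam).
    { apply fold_max_ge. apply in_map; auto. }
    rewrite len_piX in *. lia.
Qed.

(** * Shapes are quantifier-free definable *)

Definition FTrue : form := FEq TRoot TRoot.
Definition FFalse : form := FNot FTrue.
Definition FOr (p q : form) : form := FNot (FAnd (FNot p) (FNot q)).
Definition bigAnd (l : list form) : form := fold_right FAnd FTrue l.
Definition bigOr (l : list form) : form := fold_right FOr FFalse l.

Lemma sat_bigAnd Gam lam n env l : sat Gam lam n env (bigAnd l) <-> forall f, In f l -> sat Gam lam n env f.
Proof.
  induction l as [|f l IH]; simpl.
  - split; auto. intros _ f [].
  - rewrite IH. split; [intros [H1 H2] g [<-|Hg]; auto|intros H; split; auto].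
Qed.

Lemma sat_bigOr Gam lam n env l : sat Gam lam n env (bigOr l) <-> exists f, In f l /\ sat Gam lam n env f.
Proof.
  induction l as [|f l IH].
  - simpl. split; [intros H; exfalso; apply H; reflexivity|intros [f [[] _]]].
  - change (sat Gam lam n env (FOr f (bigOr l)) <-> exists g, In g (f :: l) /\ sat Gam lam n env g).
    unfold FOr. cbn [sat]. split.
    + intros H. destruct (classic (sat Gam lam n env f)) as [Hf|Hf]; [exists f; split; [left|]; auto|].
      destruct (classic (sat Gam lam n env (bigOr l))) as [Hr|Hr].
      * apply IH in Hr as [g [Hg Hs]]; exists g; split; [right|]; auto.
      * exfalso; apply H; split; auto.
    + intros [g [[<-|Hg] Hs]] [H1 H2]; auto. apply H2, IH; eauto.
Qed.

Lemma wf_bigAnd Gam k l : (forall f, In f l -> form_wf Gam k f) -> form_wf Gam k (bigAnd l).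
Proof. induction l; simpl; intros H; [split; exact I|split; auto]. Qed.

Lemma wf_bigOr Gam k l : (forall f, In f l -> form_wf Gam k f) -> form_wf Gam k (bigOr l).
Proof. induction l; simpl; intros H; [split; exact I|split; auto]. Qed.

Definition length_formula (Gam : list (list nat)) (L : nat) (t : term) : form :=
  bigOr (map (fun sg => FP sg t) (filter (fun sg => Nat.eqb (length sg) L) Gam)).

Lemma sat_length_formula Gam lam n env L t : In (piX (tev env t)) Gam ->
  (sat Gam lam n env (length_formula Gam L t) <-> length (tev env t) = L).
Proof.
  intros Hin. unfold length_formula. rewrite sat_bigOr. split.
  - intros [f [Hf Hs]]. apply in_map_iff in Hf as [sg [<- Hsg]]. apply filter_In in Hsg as [_ E].
    apply Nat.eqb_eq in E. simpl in Hs. destruct Hs as [_ Hs]. rewrite <- len_piX, Hs; auto.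
  - intros HL. exists (FP (piX (tev env t)) t). split.
    + apply (in_map (fun sg => FP sg t)). apply filter_In; split; auto. apply Nat.eqb_eq. rewrite len_piX; auto.
    + simpl; auto.
Qed.

Lemma wf_length_formula Gam k L t : term_wf k t -> form_wf Gam k (length_formula Gam L t).
Proof.
  intros Ht. apply wf_bigOr. intros f Hf. apply in_map_iff in Hf as [sg [<- Hsg]].
  apply filter_In in Hsg as [H _]. simpl; auto.
Qed.

Definition shape_formula (Gam : list (list nat)) (m : nat) (tau : shape) : form :=
  bigAnd (map (fun i => FP (nth i (fst tau) []) (TVar i)) (seq 0 (S m)) ++
          flat_map (fun i => map (fun j => length_formula Gam (nth j (nth i (snd tau) []) 0) (TMeet (TVar i) (TVar j)))
                             (seq 0 (S m))) (seq 0 (S m))).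

Lemma piX_prefix_in Gam lam n x k : tree_plan Gam lam -> in_GammaX Gam lam n x ->
  In (firstn k (piX x)) Gam.
Proof.
  intros [_ [Hc _]] [Hx _]. apply (Hc _ (skipn k (piX x))). rewrite firstn_skipn; auto.
Qed.

Lemma sat_shape_formula Gam lam n m env tau : tree_plan Gam lam ->
  length env = S m -> Forall (in_GammaX Gam lam n) env ->
  length (fst tau) = S m -> length (snd tau) = S m -> (forall r, In r (snd tau) -> length r = S m) ->
  (sat Gam lam n env (shape_formula Gam m tau) <-> shape_of env = tau).
Proof.
  intros Htp Hl Hv H1 H2 H3. unfold shape_formula. rewrite sat_bigAnd, shape_of_iff_nth; [|congruence|congruence|intros r Hr; rewrite Hl; auto].
  rewrite Hl.
  assert (Hvi : forall i, i < S m -> in_GammaX Gam lam n (nth i env [])).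
  { intros i Hi. apply (proj1 (Forall_forall _ _) Hv). apply nth_In; lia. }
  split.
  - intros H. split.
    + intros i Hi.
      assert (Hin : In (FP (nth i (fst tau) []) (TVar i))
        (map (fun i => FP (nth i (fst tau) []) (TVar i)) (seq 0 (S m)) ++
          flat_map (fun i => map (fun j => length_formula Gam (nth j (nth i (snd tau) []) 0) (TMeet (TVar i) (TVar j)))
                             (seq 0 (S m))) (seq 0 (S m)))).
      { apply in_or_app; left. apply (in_map (fun i => FP (nth i (fst tau) []) (TVar i))), in_seq; lia. }
      specialize (H _ Hin). simpl in H. apply H.
    + intros i j Hi Hj.
      assert (Hs := H (length_formula Gam (nth j (nth i (snd tau) []) 0) (TMeet (TVar i) (TVar j)))).
      rewrite sat_length_formula in Hs.
      * apply Hs. apply in_or_app; right. apply in_flat_map. exists i; split; [apply in_seq; lia|].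
        apply (in_map (fun j => length_formula Gam (nth j (nth i (snd tau) []) 0) (TMeet (TVar i) (TVar j)))).
        apply in_seq; lia.
      * simpl. rewrite meet_firstn, piX_firstn. apply (piX_prefix_in Gam lam n); auto.
  - intros [Ha Hb] f Hf. apply in_app_or in Hf as [Hf|Hf].
    + apply in_map_iff in Hf as [i [<- Hi]]. apply in_seq in Hi. simpl. rewrite Ha by lia.
      split; auto. rewrite <- Ha by lia. apply (Hvi i); lia.
    + apply in_flat_map in Hf as [i [Hi Hf]]. apply in_map_iff in Hf as [j [<- Hj]].
      apply in_seq in Hi, Hj. rewrite sat_length_formula.
      * simpl. apply Hb; lia.
      * simpl. rewrite meet_firstn, piX_firstn. apply (piX_prefix_in Gam lam n); auto. apply Hvi; lia.
Qed.

Lemma wf_shape_formula Gam m tau : (forall sg, In sg (fst tau) -> In sg Gam) -> length (fst tau) = S m ->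
  form_wf Gam (S m) (shape_formula Gam m tau).
Proof.
  intros H Hl. apply wf_bigAnd. intros f Hf. apply in_app_or in Hf as [Hf|Hf].
  - apply in_map_iff in Hf as [i [<- Hi]]. apply in_seq in Hi. simpl. split; [apply H, nth_In; lia|lia].
  - apply in_flat_map in Hf as [i [Hi Hf]]. apply in_map_iff in Hf as [j [<- Hj]].
    apply in_seq in Hi, Hj. apply wf_length_formula. simpl; lia.
Qed.

Definition witness_formula Gam m phi (tau : shape) : form := FEx (FAnd (shape_formula Gam m tau) phi).

Definition selector_formula Gam m phi (ws : list bool) : form :=
  bigAnd (map (fun p : bool * shape => if fst p then witness_formula Gam m phi (snd p) else FNot (witness_formula Gam m phi (snd p)))
              (combine ws (all_shapes Gam m))).

Definition selected Gam m (ws : list bool) : list shape := map snd (filter fst (combine ws (all_shapes Gam m))).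

Lemma sat_witness_formula Gam lam n m phi b tau : tree_plan Gam lam ->
  length b = m -> Forall (in_GammaX Gam lam n) b -> In tau (all_shapes Gam m) ->
  (sat Gam lam n b (witness_formula Gam m phi tau) <->
   exists a, in_GammaX Gam lam n a /\ shape_of (a :: b) = tau /\ sat Gam lam n (a :: b) phi).
Proof.
  intros Htp Hl Hv Ht. destruct (all_shapes_wf _ _ _ Ht) as [H1 [H2 [H3 H4]]].
  unfold witness_formula; simpl. split.
  - intros [a [Ha [Hs Hp]]]. exists a; split; [auto|split; auto].
    apply (proj1 (sat_shape_formula Gam lam n m (a :: b) tau Htp ltac:(simpl; lia) (Forall_cons _ Ha Hv) H1 H3 H4)); auto.
  - intros [a [Ha [Hs Hp]]]. exists a; split; [auto|split; auto].
    apply (proj2 (sat_shape_formula Gam lam n m (a :: b) tau Htp ltac:(simpl; lia) (Forall_cons _ Ha Hv) H1 H3 H4)); auto.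
Qed.

Lemma selected_in_all_shapes Gam m ws tau : In tau (selected Gam m ws) -> In tau (all_shapes Gam m).
Proof.
  unfold selected. intros H. apply in_map_iff in H as [[w t] [<- H]]. apply filter_In in H as [H _].
  eapply in_combine_r; eauto.
Qed.

Lemma combine_map_in {A B} (g : B -> A) (l : list B) w x : In (w, x) (combine (map g l) l) -> w = g x.
Proof. induction l; simpl; [intros []|]. intros [E|H]; [inversion E; auto|auto]. Qed.

Lemma map_snd_combine {A B} (l : list A) (l' : list B) : length l = length l' -> map snd (combine l l') = l'.
Proof. revert l'; induction l; intros [|x l'] H; simpl in *; try discriminate; auto. f_equal; auto. Qed.

Lemma nodup_snd_filter {A B} (f : A * B -> bool) l : NoDup (map snd l) -> NoDup (map snd (filter f l)).
Proof.
  induction l as [|x l IH]; simpl; intros H; auto. inversion H; subst.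
  destruct (f x); simpl; auto. constructor; auto.
  intros Hin; apply H2. apply in_map_iff in Hin as [y [E Hy]]. apply filter_In in Hy as [Hy _].
  rewrite <- E; apply in_map; auto.
Qed.

Lemma selected_nodup Gam m ws : length ws = length (all_shapes Gam m) -> NoDup (selected Gam m ws).
Proof.
  intros H. unfold selected. apply nodup_snd_filter. rewrite map_snd_combine; auto. apply all_shapes_nodup.
Qed.

Lemma in_combine_ex {A B} (ws : list A) (l : list B) x : length ws = length l -> In x l ->
  exists w, In (w, x) (combine ws l).
Proof.
  revert l; induction ws as [|w ws IH]; intros [|y l] H Hx; simpl in *; try discriminate; try tauto.
  destruct Hx as [<-|Hx]; [exists w; auto|]. destruct (IH l ltac:(lia) Hx) as [w' Hw]; eauto.
Qed.

Lemma sat_selector_formula Gam lam n m phi ws b :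
  sat Gam lam n b (selector_formula Gam m phi ws) <->
  forall w tau, In (w, tau) (combine ws (all_shapes Gam m)) ->
     (if w then sat Gam lam n b (witness_formula Gam m phi tau) else ~ sat Gam lam n b (witness_formula Gam m phi tau)).
Proof.
  unfold selector_formula. rewrite sat_bigAnd. split.
  - intros H w tau Hin. specialize (H _ (in_map (fun p : bool * shape => if fst p then witness_formula Gam m phi (snd p)
             else FNot (witness_formula Gam m phi (snd p))) _ _ Hin)). destruct w; auto.
  - intros H f Hf. apply in_map_iff in Hf as [[w tau] [<- Hin]]. specialize (H w tau Hin).
    destruct w; auto.
Qed.

(* Under the selector of ws, phi(x, b) holds exactly for the a such that
   (a :: b) has a selected shape: a selected shape has a witness, and by
   indiscernibility every tuple of that shape satisfies phi. *)
Lemma sat_phi_selected Gam lam n m phi ws b : tree_plan Gam lam ->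
  length b = m -> Forall (in_GammaX Gam lam n) b -> length ws = length (all_shapes Gam m) ->
  S m + qdepth phi < n -> sat Gam lam n b (selector_formula Gam m phi ws) ->
  forall a, in_GammaX Gam lam n a ->
    (sat Gam lam n (a :: b) phi <-> exists tau, In tau (selected Gam m ws) /\ shape_of (a :: b) = tau).
Proof.
  intros Htp Hl Hv Hw Hn Hth a Ha. rewrite sat_selector_formula in Hth. split.
  - intros Hp. set (tau := shape_of (a :: b)).
    assert (Ht : In tau (all_shapes Gam m)) by (apply (shape_of_in_all_shapes Gam lam n); simpl; auto).
    destruct (in_combine_ex ws _ _ Hw Ht) as [w Hin].
    exists tau; split; auto. specialize (Hth w tau Hin).
    destruct w.
    + unfold selected. apply (in_map snd (filter fst (combine ws (all_shapes Gam m))) (true, tau)).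
      apply filter_In; auto.
    + exfalso; apply Hth. apply (sat_witness_formula Gam lam n m phi b tau Htp Hl Hv Ht). exists a; auto.
  - intros [tau [Hs Heq]]. unfold selected in Hs. apply in_map_iff in Hs as [[w tau'] [E Hin]].
    simpl in E; subst tau'. apply filter_In in Hin as [Hin Hw']. simpl in Hw'; subst w.
    specialize (Hth true tau Hin). simpl in Hth.
    assert (Ht : In tau (all_shapes Gam m)) by (eapply in_combine_r; eauto).
    apply (sat_witness_formula Gam lam n m phi b tau Htp Hl Hv Ht) in Hth as [a0 [Ha0 [Hs0 Hp0]]].
    apply (proj2 (sat_shape_eq Gam lam phi n n (a :: b) (a0 :: b) ltac:(apply shape_of_iff; [simpl; auto|congruence])
        ltac:(simpl; lia) ltac:(simpl; lia) (Forall_cons _ Ha Hv) (Forall_cons _ Ha0 Hv))); auto.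
Qed.

(** * Sizes of definable sets *)

Definition sumR (l : list R) : R := fold_right Rplus 0%R l.

Lemma sumR_INR {A} (f : A -> nat) l : sumR (map (fun x => INR (f x)) l) = INR (list_sum (map f l)).
Proof. induction l; simpl; auto. unfold sumR in *; simpl. rewrite plus_INR, IHl; auto. Qed.

Lemma sumR_mult {A} (f : A -> R) (a : R) l :
  sumR (map (fun x => (f x * a)%R) l) = (sumR (map f l) * a)%R.
Proof. induction l; unfold sumR in *; simpl; [ring|]. rewrite IHl; ring. Qed.

Lemma list_sum_le {A} (f : A -> nat) l D :
  (forall x, In x l -> f x <= D) -> list_sum (map f l) <= length l * D.
Proof.
  induction l as [|a l IH]; simpl; intros H; [lia|].
  assert (H1 := H a (or_introl eq_refl)). specialize (IH (fun x Hx => H x (or_intror Hx))). lia.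
Qed.

Lemma union_bounds {X} Gam lam n (P : X -> elt -> Prop) (l : list X) (lo hi : X -> R) :
  NoDup l -> (forall x a, In x l -> P x a -> in_GammaX Gam lam n a) ->
  (forall x y a, In x l -> In y l -> P x a -> P y a -> x = y) ->
  (forall x c, In x l -> has_card (P x) c -> (lo x <= INR c <= hi x)%R) ->
  forall c, has_card (fun a => exists x, In x l /\ P x a) c ->
  (sumR (map lo l) <= INR c <= sumR (map hi l))%R.
Proof.
  induction l as [|x l IH]; intros Hnd Hv Hd Hb c Hc; simpl.
  - assert (c = 0) by (eapply hc_unique; [exact Hc|apply hc_empty; intros a [y [[] _]]]).
    subst; simpl; lra.
  - inversion Hnd as [|? ? Hxl Hndl]; subst.
    destruct (has_card_Gamma_subset Gam lam n (P x)) as [c1 H1]; [intros a Ha; eapply Hv; eauto; left; auto|].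
    destruct (has_card_Gamma_subset Gam lam n (fun a => exists y, In y l /\ P y a)) as [c2 H2].
    { intros a [y [Hy Ha]]; eapply Hv; eauto; right; auto. }
    assert (Hu := hc_union _ _ _ _ H1 H2 ltac:(intros a Ha [y [Hy Ha']];
                   assert (x = y) by (eapply Hd; eauto; [left|right]; auto); subst; auto)).
    assert (c = c1 + c2).
    { eapply hc_unique; [exact Hc|]. eapply hc_ext; [|exact Hu].
      intros a; split; [intros [Ha|[y [Hy Ha]]]; [exists x; split; [left|]|exists y; split; [right|]]; auto|].
      intros [y [[<-|Hy] Ha]]; [left|right; exists y]; auto. }
    subst. rewrite plus_INR.
    assert (B1 := Hb x c1 (or_introl eq_refl) H1).
    assert (B2 := IH Hndl (fun y a Hy => Hv y a (or_intror Hy)) (fun y z a Hy Hz => Hd y z a (or_intror Hy) (or_intror Hz))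
                     (fun y c Hy => Hb y c (or_intror Hy)) c2 H2).
    lra.
Qed.

Definition dedup (Gam : list (list nat)) : list (list nat) := nodup (list_eq_dec Nat.eq_dec) Gam.

Lemma card_Gamma Gam lam n cA : has_card (in_GammaX Gam lam n) cA ->
  INR cA = sumR (map (fun sg => INR (n ^ count_inf lam sg)) (dedup Gam)).
Proof.
  intros H.
  assert (B := union_bounds Gam lam n (fun sg a => in_GammaX Gam lam n a /\ piX a = sg)
                 (dedup Gam)
                 (fun sg => INR (n ^ count_inf lam sg)) (fun sg => INR (n ^ count_inf lam sg))
                 (NoDup_nodup _ _) ltac:(intros x a _ [Ha _]; auto)
                 ltac:(intros x y a _ _ [_ E1] [_ E2]; congruence)).
  assert (B' : forall x c, In x (dedup Gam) ->
                  has_card (fun a => in_GammaX Gam lam n a /\ piX a = x) c ->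
                  (INR (n ^ count_inf lam x) <= INR c <= INR (n ^ count_inf lam x))%R).
  { intros x c Hx Hc. apply nodup_In in Hx.
    rewrite (hc_unique _ _ _ Hc (card_fiber Gam lam n x Hx)). lra. }
  specialize (B B' cA).
  assert (Hc : has_card (fun a => exists x, In x (dedup Gam) /\
                         in_GammaX Gam lam n a /\ piX a = x) cA).
  { eapply hc_ext; [|exact H]. intros a; split.
    - intros Ha. exists (piX a). split; auto. apply nodup_In. apply Ha.
    - intros [x [_ [Ha _]]]; auto. }
  specialize (B Hc). lra.
Qed.

(* The exponent of a shape of tuples (a :: b): the number of infinity-nodes
   of the projection of a beyond its longest meet with the entries of b. *)
Definition shape_exponent (lam : list nat -> bool) (tau : shape) : nat :=
  let sg := nth 0 (fst tau) [] in
  let L := fold_right Nat.max 0 (tl (nth 0 (snd tau) [])) in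
  count_inf_from lam sg L (length sg - L).

Lemma shape_exponent_of lam (a0 : elt) (b : list elt) j :
  (forall i, mlen a0 (nth i b []) <= mlen a0 (nth j b [])) ->
  shape_exponent lam (shape_of (a0 :: b)) =
  count_inf_from lam (piX a0) (mlen a0 (nth j b [])) (length (piX a0) - mlen a0 (nth j b [])).
Proof.
  intros Hmax. unfold shape_exponent, shape_of. simpl.
  replace (fold_right Nat.max 0 (map (mlen a0) b)) with (mlen a0 (nth j b [])); auto.
  apply Nat.le_antisymm.
  - destruct (Nat.lt_ge_cases j (length b)).
    + apply fold_max_ge. apply in_map, nth_In; auto.
    + rewrite nth_overflow, mlen_nil_r by auto; lia.
  - apply fold_max_le. intros x Hx. apply in_map_iff in Hx as [y [<- Hy]].
    apply In_nth with (d := []) in Hy as [i [_ <-]]. apply Hmax.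
Qed.

Lemma shape_card_bounds Gam lam n m b tau a0 t :
  length b = m -> in_GammaX Gam lam n a0 -> shape_of (a0 :: b) = tau -> m < n ->
  has_card (fun a => in_GammaX Gam lam n a /\ shape_of (a :: b) = tau) t ->
  (INR (n ^ shape_exponent lam tau) * (1 - INR m / INR n) <= INR t
   <= INR (n ^ shape_exponent lam tau))%R.
Proof.
  intros Hl Ha0 Hs Hmn Ht.
  destruct (argmax_mlen a0 b) as [j Hmax].
  assert (Ht' : has_card (fun a => in_GammaX Gam lam n a /\ shape_eq (a :: b) (a0 :: b)) t).
  { eapply hc_ext; [|exact Ht]. intros a; rewrite <- Hs, shape_of_iff; simpl; auto; tauto. }
  pose proof (realisations_upper Gam lam n b a0 j t Ht') as Up.
  pose proof (realisations_lower Gam lam n b a0 j Ha0 Hmax t Ht') as Lo.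
  rewrite <- (shape_exponent_of lam a0 b j Hmax), Hs in Up, Lo. rewrite Hl in Lo.
  split.
  - assert (Hn : (0 < INR n)%R) by (apply lt_0_INR; lia).
    apply le_INR in Lo. rewrite !mult_INR, minus_INR in Lo by lia.
    apply (Rmult_le_reg_r (INR n)); auto.
    replace (INR (n ^ shape_exponent lam tau) * (1 - INR m / INR n) * INR n)%R
      with (INR (n ^ shape_exponent lam tau) * (INR n - INR m))%R by (field; lra).
    lra.
  - apply le_INR; auto.
Qed.

Lemma definable_card_bounds Gam lam n m phi ws b c : tree_plan Gam lam ->
  length b = m -> Forall (in_GammaX Gam lam n) b -> length ws = length (all_shapes Gam m) ->
  S m + qdepth phi < n -> sat Gam lam n b (selector_formula Gam m phi ws) ->
  has_card (fun a => in_GammaX Gam lam n a /\ sat Gam lam n (a :: b) phi) c ->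
  (sumR (map (fun tau => INR (n ^ shape_exponent lam tau) * (1 - INR m / INR n))%R (selected Gam m ws)) <= INR c <=
   sumR (map (fun tau => INR (n ^ shape_exponent lam tau)) (selected Gam m ws)))%R.
Proof.
  intros Htp Hl Hv Hw Hn Hth Hc.
  apply (union_bounds Gam lam n (fun tau a => in_GammaX Gam lam n a /\ shape_of (a :: b) = tau)).
  - apply selected_nodup; auto.
  - intros x a _ [Ha _]; auto.
  - intros x y a _ _ [_ E1] [_ E2]; congruence.
  - intros tau t Hin Ht.
    assert (Hin' := Hin). unfold selected in Hin'. apply in_map_iff in Hin' as [[w tau'] [E Hin']].
    simpl in E; subst tau'. apply filter_In in Hin' as [Hin' Hw']. simpl in Hw'; subst w.
    rewrite sat_selector_formula in Hth. specialize (Hth true tau Hin'). simpl in Hth.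
    assert (HT : In tau (all_shapes Gam m)) by (eapply in_combine_r; eauto).
    apply (sat_witness_formula Gam lam n m phi b tau Htp Hl Hv HT) in Hth as [a0 [Ha0 [Hs0 _]]].
    apply (shape_card_bounds Gam lam n m b tau a0 t); auto. lia.
  - eapply hc_ext; [|exact Hc]. intros a; split.
    + intros [Ha Hp]. apply (sat_phi_selected Gam lam n m phi ws b) in Hp as [tau [H1 H2]]; auto.
      exists tau; auto.
    + intros [tau [Htau [Ha Hs]]]. split; auto.
      apply (sat_phi_selected Gam lam n m phi ws b); auto. exists tau; auto.
Qed.


(** * Asymptotics of sums of powers *)

Section Asymptotics.

Local Open Scope R_scope.

Definition power_sum (l : list nat) (n : nat) : R := sumR (map (fun e => INR (n ^ e)) l).

Lemma lim_inv_n : is_lim_seq (fun n => / INR n) 0.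
Proof.
  replace (Finite 0) with (Rbar_inv p_infty) by reflexivity.
  apply is_lim_seq_inv; [apply is_lim_seq_INR|discriminate].
Qed.

Lemma lim_inv_pow k : is_lim_seq (fun n => (/ INR n) ^ k) (Finite (if Nat.eqb k 0 then 1 else 0)).
Proof.
  induction k as [|k IH].
  - simpl. apply is_lim_seq_const.
  - simpl. replace (Finite 0) with (Finite (0 * (if Nat.eqb k 0 then 1 else 0))) by (f_equal; ring).
    apply is_lim_seq_mult'; [apply lim_inv_n|exact IH].
Qed.

Lemma eventually_ge1 (P : nat -> Prop) : (forall n, (1 <= n)%nat -> P n) -> eventually P.
Proof. intros H; exists 1%nat; auto. Qed.

Lemma lim_power_ratio e E : (e <= E)%nat ->
  is_lim_seq (fun n => INR (n ^ e) / INR n ^ E) (Finite (if Nat.eqb e E then 1 else 0)).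
Proof.
  intros He.
  apply is_lim_seq_ext_loc with (u := fun n => (/ INR n) ^ (E - e)).
  - apply eventually_ge1. intros n Hn. assert (Hn' : INR n <> 0) by (apply not_0_INR; lia).
    rewrite pow_INR. replace E with (e + (E - e))%nat at 2 by lia. rewrite pow_add, pow_inv.
    field. split; apply pow_nonzero; auto.
  - replace (if Nat.eqb e E then 1 else 0) with (if Nat.eqb (E - e) 0 then 1 else 0); [apply lim_inv_pow|].
    destruct (Nat.eqb_spec (E - e) 0), (Nat.eqb_spec e E); auto; lia.
Qed.

Lemma lim_power_sum l E : (forall e, In e l -> (e <= E)%nat) ->
  is_lim_seq (fun n => power_sum l n / INR n ^ E) (INR (count_occ Nat.eq_dec l E)).
Proof.
  induction l as [|e l IH]; intros H; unfold power_sum; simpl.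
  - apply is_lim_seq_ext with (u := fun _ => 0); [intros; unfold Rdiv; ring|apply is_lim_seq_const].
  - apply is_lim_seq_ext with (u := fun n => INR (n ^ e) / INR n ^ E + power_sum l n / INR n ^ E).
    { intros n; unfold power_sum, Rdiv; ring. }
    replace (INR (if Nat.eq_dec e E then S (count_occ Nat.eq_dec l E) else count_occ Nat.eq_dec l E))
      with ((if Nat.eqb e E then 1 else 0) + INR (count_occ Nat.eq_dec l E)).
    + apply is_lim_seq_plus'; [apply lim_power_ratio; apply H; left; auto|apply IH; intros; apply H; right; auto].
    + destruct (Nat.eq_dec e E), (Nat.eqb_spec e E); try lia; rewrite ?S_INR; ring.
Qed.

Lemma sumR_nonneg l : (forall x, In x l -> 0 <= x) -> 0 <= sumR l.
Proof.
  induction l as [|a l IH]; intros H; [unfold sumR; simpl; lra|].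
  change (sumR (a :: l)) with (a + sumR l).
  specialize (IH (fun x Hx => H x (or_intror Hx))). specialize (H a (or_introl eq_refl)). lra.
Qed.

Lemma sumR_ge {A} (f : A -> R) l x :
  (forall y, In y l -> 0 <= f y) -> In x l -> f x <= sumR (map f l).
Proof.
  induction l as [|y l IH]; [intros _ []|]. intros H Hx.
  change (sumR (map f (y :: l))) with (f y + sumR (map f l)).
  assert (0 <= sumR (map f l)).
  { apply sumR_nonneg. intros z Hz. apply in_map_iff in Hz as [w [<- Hw]]. apply H; right; auto. }
  destruct Hx as [<-|Hx]; [lra|]. specialize (IH (fun z Hz => H z (or_intror Hz)) Hx).
  specialize (H y (or_introl eq_refl)). lra.
Qed.

Lemma power_sum_ge l n e : In e l -> INR (n ^ e) <= power_sum l n.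
Proof.
  intros He. apply (sumR_ge (fun e => INR (n ^ e))); auto. intros; apply pos_INR.
Qed.

Lemma Rpower_pow_r x D E : 0 < x -> (0 < D)%nat ->
  Rpower (x ^ D) (INR E / INR D) = x ^ E.
Proof.
  intros Hx HD. rewrite <- Rpower_pow by auto. rewrite Rpower_mult.
  replace (INR D * (INR E / INR D)) with (INR E).
  - apply Rpower_pow; auto.
  - field. apply not_0_INR; lia.
Qed.

Lemma power_sum_root_ratio (lU lQ : list nat) (D E : nat) :
  (0 < D)%nat -> In D lU -> (forall e, In e lU -> (e <= D)%nat) ->
  (forall e, In e lQ -> (e <= E)%nat) ->
  is_lim_seq (fun n => power_sum lQ n / Rpower (power_sum lU n) (INR E / INR D))
    (INR (count_occ Nat.eq_dec lQ E) / Rpower (INR (count_occ Nat.eq_dec lU D)) (INR E / INR D)).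
Proof.
  intros HD HinD HU HQ.
  set (r := INR E / INR D). set (C := INR (count_occ Nat.eq_dec lU D)).
  assert (HC : 0 < C).
  { unfold C. apply lt_0_INR. apply (count_occ_In Nat.eq_dec) in HinD; lia. }
  assert (Hu : is_lim_seq (fun n => power_sum lU n / INR n ^ D) C) by (apply lim_power_sum; auto).
  assert (Hq := lim_power_sum lQ E HQ).
  assert (Hv : is_lim_seq (fun n => Rpower (power_sum lU n / INR n ^ D) r) (Rpower C r)).
  { apply (is_lim_seq_continuous (fun x => Rpower x r)); auto.
    apply derivable_continuous_pt. exists (r * Rpower C (r - 1)). apply derivable_pt_lim_power; auto. }
  assert (HPC : 0 < Rpower C r) by (unfold Rpower; apply exp_pos).
  apply is_lim_seq_ext_loc with
    (u := fun n => (power_sum lQ n / INR n ^ E) / Rpower (power_sum lU n / INR n ^ D) r).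
  - apply eventually_ge1. intros n Hn.
    assert (Hnp : 0 < INR n) by (apply lt_0_INR; lia).
    assert (HUn : 0 < power_sum lU n).
    { apply Rlt_le_trans with (INR (n ^ D)); [|apply power_sum_ge; auto].
      apply lt_0_INR. apply Nat.neq_0_lt_0, Nat.pow_nonzero; lia. }
    assert (HnD : 0 < INR n ^ D) by (apply pow_lt; auto).
    assert (HnE : 0 < INR n ^ E) by (apply pow_lt; auto).
    assert (Hv0 : 0 < Rpower (power_sum lU n / INR n ^ D) r) by (unfold Rpower; apply exp_pos).
    replace (Rpower (power_sum lU n) r) with (Rpower (power_sum lU n / INR n ^ D) r * INR n ^ E).
    + field; lra.
    + replace (power_sum lU n) with ((power_sum lU n / INR n ^ D) * INR n ^ D) at 2 by (field; lra).
      rewrite <- Rpower_mult_distr by (try apply Rdiv_lt_0_compat; auto).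
      unfold r; rewrite Rpower_pow_r; auto.
  - apply is_lim_seq_div'; auto; lra.
Qed.

Lemma relative_sandwich (lo hi c mu eps P : R) :
  0 < P -> lo <= c <= hi -> R_dist (lo / P) mu < eps -> R_dist (hi / P) mu < eps ->
  Rabs (c - mu * P) <= eps * P.
Proof.
  intros HP Hc Hlo Hhi. unfold R_dist in *.
  assert (H1 : c / P <= hi / P) by (apply Rmult_le_compat_r; [left; apply Rinv_0_lt_compat|]; lra).
  assert (H2 : lo / P <= c / P) by (apply Rmult_le_compat_r; [left; apply Rinv_0_lt_compat|]; lra).
  replace (c - mu * P) with (P * (c / P - mu)) by (field; lra).
  rewrite Rabs_mult, Rabs_pos_eq by lra. rewrite Rmult_comm.
  apply Rmult_le_compat_r; [lra|].
  apply Rabs_le. apply Rabs_def2 in Hlo, Hhi. lra.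
Qed.

Lemma power_sum_estimate (lU lQ : list nat) (D E m : nat) (eps : R) :
  (0 < D)%nat -> In D lU -> (forall e, In e lU -> (e <= D)%nat) ->
  (forall e, In e lQ -> (e <= E)%nat) -> 0 < eps ->
  exists N, forall n, (N <= n)%nat -> forall c : R,
    power_sum lQ n * (1 - INR m / INR n) <= c <= power_sum lQ n ->
    Rabs (c - INR (count_occ Nat.eq_dec lQ E) /
                Rpower (INR (count_occ Nat.eq_dec lU D)) (INR E / INR D)
              * Rpower (power_sum lU n) (INR E / INR D))
      <= eps * Rpower (power_sum lU n) (INR E / INR D).
Proof.
  intros HD HinD HU HQ Heps.
  set (mu := INR (count_occ Nat.eq_dec lQ E) /
             Rpower (INR (count_occ Nat.eq_dec lU D)) (INR E / INR D)).
  set (P := fun n => Rpower (power_sum lU n) (INR E / INR D)).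
  assert (Hhi : is_lim_seq (fun n => power_sum lQ n / P n) mu)
    by (apply power_sum_root_ratio; auto).
  assert (Hlo : is_lim_seq (fun n => power_sum lQ n * (1 - INR m / INR n) / P n) mu).
  { replace (Finite mu) with (Finite (mu * (1 - INR m * 0))) by (f_equal; ring).
    apply is_lim_seq_ext with (u := fun n => power_sum lQ n / P n * (1 - INR m * / INR n)).
    { intros n; unfold Rdiv; ring. }
    apply is_lim_seq_mult'; [exact Hhi|]. apply is_lim_seq_minus'; [apply is_lim_seq_const|].
    apply is_lim_seq_mult'; [apply is_lim_seq_const|apply lim_inv_n]. }
  apply is_lim_seq_Reals in Hhi, Hlo.
  destruct (Hhi eps Heps) as [N1 HN1]. destruct (Hlo eps Heps) as [N2 HN2].
  exists (Nat.max N1 N2). intros n Hn c Hc.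
  apply (relative_sandwich _ _ c mu eps (P n) ltac:(unfold P, Rpower; apply exp_pos) Hc);
    [apply HN2|apply HN1]; lia.
Qed.

End Asymptotics.

Lemma degP_eq Gam lam : degP Gam lam = fold_right Nat.max 0 (map (count_inf lam) Gam).
Proof. unfold degP; induction Gam; simpl; auto. Qed.

Lemma fold_max_in l : l <> [] -> In (fold_right Nat.max 0 l) l.
Proof.
  induction l as [|x l IH]; intros H; [congruence|].
  change (In (Nat.max x (fold_right Nat.max 0 l)) (x :: l)).
  destruct l as [|y l'].
  - simpl; left; lia.
  - specialize (IH ltac:(discriminate)).
    set (F := fold_right Nat.max 0 (y :: l')) in *.
    destruct (Nat.le_ge_cases x F) as [Hle|Hge].
    + right. replace (Nat.max x F) with F by lia. auto.
    + left; lia.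
Qed.

Lemma count_inf_le_degP Gam lam s : In s Gam -> count_inf lam s <= degP Gam lam.
Proof. intros H; rewrite degP_eq; apply fold_max_ge, in_map; auto. Qed.

Lemma degP_attained Gam lam : Gam <> [] -> In (degP Gam lam) (map (count_inf lam) (dedup Gam)).
Proof.
  intros H.
  replace (degP Gam lam) with (fold_right Nat.max 0 (map (count_inf lam) (dedup Gam))).
  - apply fold_max_in. destruct Gam as [|s G]; [congruence|].
    intros E. apply map_eq_nil in E. assert (Hs : In s (dedup (s :: G))) by (apply nodup_In; left; auto).
    rewrite E in Hs; auto.
  - rewrite degP_eq. apply Nat.le_antisymm; apply fold_max_le; intros x Hx;
      apply in_map_iff in Hx as [s [<- Hs]]; apply fold_max_ge; apply in_map; unfold dedup in *;
      [apply nodup_In in Hs|apply nodup_In]; auto.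
Qed.

(* An infinity-node counts itself. *)
Lemma count_inf_pos lam s : lam [] = false -> lam s = true -> 1 <= count_inf lam s.
Proof.
  intros H0 H1. destruct s as [|x s]; [congruence|]. unfold count_inf.
  assert (In (length (x :: s)) (filter (fun k => lam (firstn k (x :: s))) (seq 1 (length (x :: s))))).
  { apply filter_In; split; [apply in_seq; simpl; lia|]. rewrite firstn_all; auto. }
  destruct (filter _ _); [destruct H|simpl; lia].
Qed.

Lemma degP_pos Gam lam : tree_plan Gam lam -> (exists s, In s Gam /\ lam s = true) ->
  1 <= degP Gam lam.
Proof.
  intros [_ [_ Hl0]] [s [Hs Hls]].
  etransitivity; [apply (count_inf_pos lam s); auto|]. apply count_inf_le_degP; auto.
Qed.

Lemma count_inf_from_le lam sg L : count_inf_from lam sg L (length sg - L) <= count_inf lam sg.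
Proof.
  unfold count_inf_from, count_inf. destruct (Nat.le_ge_cases L (length sg)).
  - replace (length sg) with (L + (length sg - L)) at 2 by lia.
    rewrite seq_app, filter_app, length_app. replace (1 + L) with (S L) by lia. lia.
  - replace (length sg - L) with 0 by lia. simpl; lia.
Qed.

Lemma shape_exponent_le Gam lam m tau :
  In tau (all_shapes Gam m) -> shape_exponent lam tau <= degP Gam lam.
Proof.
  intros Ht. destruct (all_shapes_wf _ _ _ Ht) as [H1 [H2 _]].
  unfold shape_exponent. etransitivity; [apply count_inf_from_le|].
  apply count_inf_le_degP, H2, nth_In. lia.
Qed.

Definition all_masks (K : nat) : list (list bool) := prods (repeat [true; false] K).

Lemma all_masks_in ws K : length ws = K -> In ws (all_masks K).
Proof.
  intros H. apply in_prods, Forall2_repeat. split; auto. intros [|] _; simpl; auto.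
Qed.

Lemma all_masks_len ws K : In ws (all_masks K) -> length ws = K.
Proof. intros H. apply in_prods, Forall2_repeat in H; tauto. Qed.

Lemma all_masks_nodup K : NoDup (all_masks K).
Proof.
  apply nodup_prods. apply Forall_forall. intros c Hc. apply repeat_spec in Hc; subst.
  constructor; [intros [H|[]]; discriminate|constructor; [intros []|constructor]].
Qed.

(* The number C of points of Gam with D infinity-nodes: |Gam(n)| ~ C n^D. *)
Definition top_count Gam lam : nat :=
  count_occ Nat.eq_dec (map (count_inf lam) (dedup Gam)) (degP Gam lam).

(* For the selection ws: the dimension is the largest selected exponent e,
   and the measure is (number of selected shapes of exponent e) / C^(e/D). *)
Definition mask_exponent lam Gam m ws : nat :=
  fold_right Nat.max 0 (map (shape_exponent lam) (selected Gam m ws)).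
Definition mask_count lam Gam m ws : nat :=
  count_occ Nat.eq_dec (map (shape_exponent lam) (selected Gam m ws)) (mask_exponent lam Gam m ws).
Definition mask_measure lam Gam m ws : R :=
  (INR (mask_count lam Gam m ws) /
   Rpower (INR (top_count Gam lam)) (INR (mask_exponent lam Gam m ws) / INR (degP Gam lam)))%R.

Definition asymptotic_data Gam lam m phi : list (nat * R * form) :=
  map (fun ws => (mask_exponent lam Gam m ws, mask_measure lam Gam m ws, selector_formula Gam m phi ws))
    (all_masks (length (all_shapes Gam m))).

Lemma nth_asymptotic_data Gam lam m phi i : i < length (asymptotic_data Gam lam m phi) ->
  let ws := nth i (all_masks (length (all_shapes Gam m))) [] in
  nth i (asymptotic_data Gam lam m phi) (0, 0%R, FEq TRoot TRoot) =
  (mask_exponent lam Gam m ws, mask_measure lam Gam m ws, selector_formula Gam m phi ws).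
Proof.
  intros H. unfold asymptotic_data in *. rewrite length_map in H.
  apply (nth_map_lt (fun ws => (mask_exponent lam Gam m ws, mask_measure lam Gam m ws,
                                selector_formula Gam m phi ws)) _ i _ ([] : list bool)); auto.
Qed.

Section PositiveHalf.

Variables (Gam : list (list nat)) (lam : list nat -> bool).
Hypothesis Htp : tree_plan Gam lam.

Lemma Gam_nonempty : Gam <> [].
Proof. destruct Htp as [Hroot _]. intros E; rewrite E in Hroot; destruct Hroot. Qed.

Lemma top_count_pos : (0 < INR (top_count Gam lam))%R.
Proof.
  apply lt_0_INR. unfold top_count.
  pose proof (degP_attained Gam lam Gam_nonempty) as HDin.
  apply (count_occ_In Nat.eq_dec) in HDin. lia.
Qed.

Lemma asymptotic_data_wf m phi : form_wf Gam (S m) phi ->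
  forall k mu th, In (k, mu, th) (asymptotic_data Gam lam m phi) ->
  k <= degP Gam lam /\ (0 <= mu)%R /\ (k <> 0 -> (0 < mu)%R) /\ form_wf Gam m th.
Proof.
  intros Hwf k mu th Hin. unfold asymptotic_data in Hin. apply in_map_iff in Hin as [ws [E Hws]].
  inversion E; subst k mu th; clear E.
  pose proof top_count_pos as HCpos.
  assert (HPp : (0 < Rpower (INR (top_count Gam lam))
                          (INR (mask_exponent lam Gam m ws) / INR (degP Gam lam)))%R)
    by (unfold Rpower; apply exp_pos).
  split; [|split; [|split]].
  - unfold mask_exponent. apply fold_max_le. intros x Hx. apply in_map_iff in Hx as [tau [<- Ht]].
    apply (shape_exponent_le Gam lam m), (selected_in_all_shapes Gam m ws); auto.
  - unfold mask_measure. apply Rmult_le_pos; [apply pos_INR|left; apply Rinv_0_lt_compat; auto].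
  - intros Hk. unfold mask_measure. apply Rdiv_lt_0_compat; auto. apply lt_0_INR.
    unfold mask_count. apply (count_occ_In Nat.eq_dec).
    unfold mask_exponent in *. apply fold_max_in. intros E; rewrite E in Hk; simpl in Hk; lia.
  - unfold selector_formula. apply wf_bigAnd. intros f Hf. apply in_map_iff in Hf as [[w tau] [<- Hp]].
    assert (Ht : In tau (all_shapes Gam m)) by (eapply in_combine_r; eauto).
    destruct (all_shapes_wf _ _ _ Ht) as [H1 [H2 _]].
    assert (form_wf Gam m (witness_formula Gam m phi tau)).
    { unfold witness_formula; simpl. split; auto. apply wf_shape_formula; auto. }
    destruct w; simpl; auto.
Qed.

(* Condition (i): every parameter tuple satisfies exactly one selector,
   namely the one recording which shapes carry a witness of phi. *)
Lemma asymptotic_data_partition m phi n b :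
  let data := asymptotic_data Gam lam m phi in
  let theta i := snd (nth i data (0, 0%R, FEq TRoot TRoot)) in
  (exists i, i < length data /\ sat Gam lam n b (theta i)) /\
  (forall i j, i < length data -> j < length data -> i <> j ->
     sat Gam lam n b (theta i) -> ~ sat Gam lam n b (theta j)).
Proof.
  intros data theta.
  set (AB := all_masks (length (all_shapes Gam m))).
  assert (Hlen : length data = length AB) by (unfold data, asymptotic_data; apply length_map).
  assert (Htheta : forall i, i < length data -> theta i = selector_formula Gam m phi (nth i AB [])).
  { intros i Hi. unfold theta, data. rewrite nth_asymptotic_data; auto. }
  split.
  - set (ws0 := map (fun tau => if excluded_middle_informative
                                     (sat Gam lam n b (witness_formula Gam m phi tau))
                                then true else false) (all_shapes Gam m)).
    assert (Hws0 : sat Gam lam n b (selector_formula Gam m phi ws0)).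
    { apply sat_selector_formula. intros w tau Hin. unfold ws0 in Hin.
      apply combine_map_in in Hin. subst w.
      destruct (excluded_middle_informative _); auto. }
    assert (Hin : In ws0 AB) by (apply all_masks_in; unfold ws0; rewrite length_map; auto).
    apply In_nth with (d := []) in Hin as [i [Hi Hi']].
    exists i. split; [lia|]. rewrite Htheta, Hi' by lia; auto.
  - intros i j Hi Hj Hij Hsi Hsj. rewrite Htheta in Hsi, Hsj by auto. rewrite Hlen in Hi, Hj.
    assert (Hne : nth i AB [] <> nth j AB []).
    { intros E. apply Hij. eapply NoDup_nth; eauto. apply all_masks_nodup. }
    assert (L1 : length (nth i AB []) = length (all_shapes Gam m)) by (apply all_masks_len, nth_In; auto).
    assert (L2 : length (nth j AB []) = length (all_shapes Gam m)) by (apply all_masks_len, nth_In; auto).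
    apply Hne. apply nth_ext with (d := false) (d' := false); [congruence|].
    intros k Hk. rewrite L1 in Hk. rewrite sat_selector_formula in Hsi, Hsj.
    set (tau := nth k (all_shapes Gam m) ([], [])).
    assert (Hci : In (nth k (nth i AB []) false, tau) (combine (nth i AB []) (all_shapes Gam m))).
    { unfold tau; rewrite <- combine_nth by auto. apply nth_In. rewrite length_combine; lia. }
    assert (Hcj : In (nth k (nth j AB []) false, tau) (combine (nth j AB []) (all_shapes Gam m))).
    { unfold tau; rewrite <- combine_nth by auto. apply nth_In. rewrite length_combine; lia. }
    specialize (Hsi _ _ Hci). specialize (Hsj _ _ Hcj).
    destruct (nth k (nth i AB []) false), (nth k (nth j AB []) false); tauto.
Qed.

Lemma Gamma_card_bound n cA N : 1 <= n ->
  has_card (in_GammaX Gam lam n) cA -> length (dedup Gam) * N ^ degP Gam lam + 1 <= cA -> N <= n.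
Proof.
  intros Hn HcA HM. destruct (Nat.le_gt_cases N n) as [|Hlt]; auto. exfalso.
  assert (Hc1 : cA = list_sum (map (fun s => n ^ count_inf lam s) (dedup Gam))).
  { apply INR_eq. rewrite (card_Gamma Gam lam n cA HcA), <- sumR_INR. reflexivity. }
  assert (Hc2 : cA <= length (dedup Gam) * n ^ degP Gam lam).
  { rewrite Hc1. apply list_sum_le. intros s Hs. apply Nat.pow_le_mono_r; [lia|].
    apply count_inf_le_degP. apply nodup_In in Hs; auto. }
  assert (n ^ degP Gam lam <= N ^ degP Gam lam) by (apply Nat.pow_le_mono_l; lia).
  nia.
Qed.

Hypothesis HD : 1 <= degP Gam lam.

Lemma asymptotic_data_estimate m phi i eps :
  i < length (asymptotic_data Gam lam m phi) -> (0 < eps)%R ->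
  exists M : nat,
    forall n : nat, (1 <= n)%nat ->
    forall cA : nat, has_card (in_GammaX Gam lam n) cA -> (M <= cA)%nat ->
    forall b : list elt, length b = m -> Forall (in_GammaX Gam lam n) b ->
    sat Gam lam n b (snd (nth i (asymptotic_data Gam lam m phi) (0%nat, 0%R, FEq TRoot TRoot))) ->
    forall c : nat,
      has_card (fun a => in_GammaX Gam lam n a /\ sat Gam lam n (a :: b) phi) c ->
      let k := fst (fst (nth i (asymptotic_data Gam lam m phi) (0%nat, 0%R, FEq TRoot TRoot))) in
      let mu := snd (fst (nth i (asymptotic_data Gam lam m phi) (0%nat, 0%R, FEq TRoot TRoot))) in
      (Rabs (INR c - mu * Rpower (INR cA) (INR k / INR (degP Gam lam)))
        <= eps * Rpower (INR cA) (INR k / INR (degP Gam lam)))%R.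
Proof.
  intros Hi Heps.
  set (D := degP Gam lam) in *.
  set (ws := nth i (all_masks (length (all_shapes Gam m))) []).
  assert (Hwsl : length ws = length (all_shapes Gam m)).
  { apply all_masks_len, nth_In. unfold asymptotic_data in Hi; rewrite length_map in Hi; auto. }
  set (lQ := map (shape_exponent lam) (selected Gam m ws)).
  set (lU := map (count_inf lam) (dedup Gam)).
  assert (HUle : forall e, In e lU -> e <= D).
  { intros e He. apply in_map_iff in He as [s [<- Hs]]. apply count_inf_le_degP.
    apply nodup_In in Hs; auto. }
  destruct (power_sum_estimate lU lQ D (mask_exponent lam Gam m ws) m eps ltac:(lia)
              (degP_attained Gam lam Gam_nonempty) HUle
              ltac:(intros e He; apply fold_max_ge; auto) Heps) as [N HN].
  set (N' := Nat.max N (S (S m + qdepth phi))).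
  exists (length (dedup Gam) * N' ^ D + 1).
  intros n Hn cA HcA HM b Hlb Hvb Hth c Hc.
  rewrite nth_asymptotic_data in Hth |- * by auto. fold ws in Hth |- *. cbn zeta. cbn [fst snd] in Hth |- *.
  assert (HcAeq : INR cA = power_sum lU n).
  { rewrite (card_Gamma Gam lam n cA HcA). unfold power_sum, lU. rewrite map_map. reflexivity. }
  pose proof (Gamma_card_bound n cA N' Hn HcA HM) as HnN.
  destruct (definable_card_bounds Gam lam n m phi ws b c Htp Hlb Hvb Hwsl ltac:(lia) Hth Hc) as [B1 B2].
  rewrite sumR_mult in B1.
  replace (sumR (map (fun tau => INR (n ^ shape_exponent lam tau)) (selected Gam m ws)))
    with (power_sum lQ n) in B1, B2 by (unfold power_sum, lQ; rewrite map_map; auto).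
  rewrite HcAeq. exact (HN n ltac:(lia) (INR c) (conj B1 B2)).
Qed.

End PositiveHalf.

Lemma asymptotic_class_degP Gam lam :
  tree_plan Gam lam -> 1 <= degP Gam lam -> asymptotic_class Gam lam (degP Gam lam).
Proof.
  intros Htp HD m phi Hwf. exists (asymptotic_data Gam lam m phi). split; [|split].
  - apply asymptotic_data_wf; auto.
  - intros n _ b _ _. apply asymptotic_data_partition.
  - intros i Hi eps Heps. apply asymptotic_data_estimate; auto.
Qed.

(** * No smaller dimension works *)

Lemma min_nat (P : nat -> Prop) k : P k -> exists k0, P k0 /\ forall j, j < k0 -> ~ P j.
Proof.
  induction k as [k IH] using (well_founded_induction lt_wf). intros Hk.
  destruct (classic (exists j, j < k /\ P j)) as [[j [Hj HPj]]|Hno].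
  - apply (IH j Hj HPj).
  - exists k; split; auto. intros j Hj HPj; apply Hno; eauto.
Qed.

Lemma filter_all_false {A} (f : A -> bool) l : (forall x, In x l -> f x = false) -> filter f l = [].
Proof. induction l; simpl; intros H; auto. rewrite H by auto. apply IHl; auto. Qed.

(* The shortest prefix of a point through an infinity-node has exactly one
   infinity-node. *)
Lemma exists_count_inf_one Gam lam : tree_plan Gam lam -> (exists s, In s Gam /\ lam s = true) ->
  exists s0, In s0 Gam /\ count_inf lam s0 = 1.
Proof.
  intros [Hr [Hcl Hl0]] [s [Hs Hls]].
  assert (Hs0 : s <> []) by (intros E; subst; congruence).
  destruct (min_nat (fun k => lam (firstn k s) = true /\ 1 <= k) (length s)) as [k0 [[H1 H2] Hmin]].
  { rewrite firstn_all; split; auto. destruct s; [congruence|simpl; lia]. }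
  assert (Hk0 : k0 <= length s).
  { destruct (Nat.le_gt_cases k0 (length s)); auto. exfalso. apply (Hmin (length s)); auto.
    rewrite firstn_all; split; auto. destruct s; [congruence|simpl; lia]. }
  exists (firstn k0 s). split.
  - apply (Hcl _ (skipn k0 s)). rewrite firstn_skipn; auto.
  - unfold count_inf. rewrite firstn_length_le by auto.
    rewrite (filter_ext_in _ (fun k => lam (firstn k s))).
    2:{ intros k Hk. apply in_seq in Hk. rewrite firstn_firstn. f_equal. f_equal. lia. }
    destruct k0 as [|j]; [lia|]. rewrite seq_S, filter_app.
    replace (filter (fun k => lam (firstn k s)) (seq 1 j)) with (@nil nat).
    + cbn [app filter]. replace (1 + j) with (S j) by lia. rewrite H1. reflexivity.
    + symmetry. apply filter_all_false. intros x Hx. apply in_seq in Hx.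
      destruct (lam (firstn x s)) eqn:E; auto. exfalso; apply (Hmin x); [lia|split; auto; lia].
Qed.

Lemma uniform_threshold (L : nat) (Q : nat -> nat -> Prop) :
  (forall i M M', M <= M' -> Q i M -> Q i M') ->
  (forall i, i < L -> exists M, Q i M) -> exists M, forall i, i < L -> Q i M.
Proof.
  intros Hm. induction L as [|L IH]; intros H.
  - exists 0; intros; lia.
  - destruct IH as [M1 H1]; [intros; apply H; lia|]. destruct (H L ltac:(lia)) as [M2 H2].
    exists (Nat.max M1 M2). intros i Hi. destruct (Nat.eq_dec i L).
    + subst; apply (Hm L M2); auto; lia.
    + apply (Hm i M1); [lia|]. apply H1; lia.
Qed.

(* The growth gap: if c >= x^D with D > N and x > (2/mu)^N, then
   mu/2 c^(k/N) exceeds x for every k >= 1, since c^(k/N) >= x^(1 + 1/N)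
   and x^(1/N) > 2/mu. *)
Lemma exponent_gap (N D k : nat) (mu x c : R) :
  1 <= N -> N < D -> 1 <= k -> (0 < mu)%R -> (1 <= x)%R -> (x ^ D <= c)%R ->
  ((2 / mu) ^ N < x)%R -> (x < mu / 2 * Rpower c (INR k / INR N))%R.
Proof.
  intros HN HND Hk Hmu Hx Hc Hbig.
  assert (HNp : (0 < INR N)%R) by (apply lt_0_INR; lia).
  assert (HxD : (1 <= x ^ D)%R) by (apply pow_R1_Rle; auto).
  set (q := Rpower x (INR 1 / INR N)).
  assert (P1 : (Rpower c (INR 1 / INR N) <= Rpower c (INR k / INR N))%R).
  { apply Rle_Rpower; [lra|]. unfold Rdiv. apply Rmult_le_compat_r.
    - left; apply Rinv_0_lt_compat; auto.
    - apply le_INR; lia. }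
  assert (P2 : (Rpower (x ^ D) (INR 1 / INR N) <= Rpower c (INR 1 / INR N))%R).
  { apply Rle_Rpower_l; [|split; lra]. simpl. left; apply Rdiv_lt_0_compat; lra. }
  assert (P3 : Rpower (x ^ D) (INR 1 / INR N) = Rpower x (INR D / INR N)).
  { rewrite <- Rpower_pow by lra. rewrite Rpower_mult. f_equal. simpl. field. lra. }
  assert (P4 : (x * q <= Rpower x (INR D / INR N))%R).
  { unfold q. rewrite <- (Rpower_1 x) at 1 by lra. rewrite <- Rpower_plus.
    apply Rle_Rpower; auto.
    assert (HDN : (INR N + 1 <= INR D)%R) by (rewrite <- S_INR; apply le_INR; lia).
    replace (1 + INR 1 / INR N)%R with ((INR N + 1) / INR N)%R by (simpl; field; lra).
    unfold Rdiv. apply Rmult_le_compat_r; [left; apply Rinv_0_lt_compat|]; lra. }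
  assert (Hq : (2 / mu < q)%R).
  { assert (H2mu : (0 < 2 / mu)%R) by (apply Rdiv_lt_0_compat; lra).
    assert (E : Rpower ((2 / mu) ^ N) (INR 1 / INR N) = (2 / mu)%R)
      by (rewrite Rpower_pow_r by (auto; lia); simpl; ring).
    rewrite <- E. unfold q. apply Rlt_Rpower_l; [apply Rdiv_lt_0_compat; simpl; lra|split; [apply pow_lt|]; auto]. }
  assert (Hxq : (x * (2 / mu) < x * q)%R) by (apply Rmult_lt_compat_l; lra).
  replace x with (mu / 2 * (x * (2 / mu)))%R at 1 by (field; lra).
  apply Rmult_lt_compat_l; [lra|]. lra.
Qed.

Lemma exists_nat_above (L : nat) (f : nat -> R) : exists n0, forall i, i < L -> (f i < INR n0)%R.
Proof.
  apply (uniform_threshold L (fun i n => (f i < INR n)%R)).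
  - intros i M M' HMM H. apply le_INR in HMM. lra.
  - intros i _. destruct (INR_archimed 1 (f i)) as [k Hk]; [lra|].
    rewrite Rmult_1_r in Hk. exists k. lra.
Qed.

Lemma le_pow_self n D : 1 <= D -> n <= n ^ D.
Proof.
  intros HD. destruct n as [|n]; [lia|].
  replace D with (1 + (D - 1)) by lia. rewrite Nat.pow_add_r, Nat.pow_1_r.
  assert (1 <= S n ^ (D - 1)) by (apply Nat.neq_0_lt_0, Nat.pow_nonzero; lia). nia.
Qed.

Definition tolerance (k : nat) (mu : R) : R := if Nat.eqb k 0 then 1%R else (mu / 2)%R.

Lemma tolerance_pos k mu : (k <> 0 -> (0 < mu)%R) -> (0 < tolerance k mu)%R.
Proof.
  intros Hmu. unfold tolerance. destruct (Nat.eqb_spec k 0) as [|Hk]; [lra|].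
  specialize (Hmu Hk). lra.
Qed.

Lemma fibre_estimate_fails (N D k n cA : nat) (mu : R) :
  1 <= N -> N < D -> 1 <= n -> (k <> 0 -> (0 < mu)%R) -> n ^ D <= cA ->
  (mu + 1 < INR n)%R -> ((2 / mu) ^ N < INR n)%R ->
  ~ (Rabs (INR n - mu * Rpower (INR cA) (INR k / INR N))
      <= tolerance k mu * Rpower (INR cA) (INR k / INR N))%R.
Proof.
  intros HN1 HND Hn1 Hmpos HcAD Hbig1 Hbig2 Hineq.
  apply Rabs_le_between in Hineq.
  unfold tolerance in Hineq. destruct (Nat.eqb_spec k 0) as [Hk0|Hk0].
  - subst k. replace (INR 0 / INR N)%R with 0%R in Hineq by (simpl; field; apply not_0_INR; lia).
    pose proof (le_pow_self n D ltac:(lia)).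
    rewrite Rpower_O in Hineq by (apply lt_0_INR; lia). lra.
  - assert (Hgap := exponent_gap N D k mu (INR n) (INR cA) HN1 HND ltac:(lia) (Hmpos Hk0)
                     ltac:(apply (le_INR 1); lia) ltac:(rewrite <- pow_INR; apply le_INR; lia) Hbig2).
    lra.
Qed.

(* Optimality: for 1 <= N < D, the formula P_s0(x), with s0 a point having a
   single infinity-node, has exactly n solutions in Gam(n) while
   |Gam(n)| >= n^D; no triple (k, mu, theta) can describe this. *)
Lemma not_asymptotic_class_below_degP Gam lam N :
  tree_plan Gam lam -> (exists s, In s Gam /\ lam s = true) ->
  1 <= N -> N < degP Gam lam -> ~ asymptotic_class Gam lam N.
Proof.
  intros Htp Hex HN1 HND Hac.
  set (D := degP Gam lam) in *.
  destruct (exists_count_inf_one Gam lam Htp Hex) as [s0 [Hs0 Hci0]].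
  pose proof (degP_attained Gam lam (Gam_nonempty Gam lam Htp)) as HDin. fold D in HDin.
  apply in_map_iff in HDin as [smax [Hcmax Hsmax]]. apply nodup_In in Hsmax.
  destruct (Hac 0 (FP s0 (TVar 0)) ltac:(simpl; split; auto)) as [data [Hprop [Hi Hii]]].
  set (dd := (0, 0%R, FEq TRoot TRoot)).
  set (kk := fun i => fst (fst (nth i data dd))).
  set (mm := fun i => snd (fst (nth i data dd))).
  assert (Hmpos : forall i, i < length data -> (kk i <> 0%nat -> (0 < mm i)%R)).
  { intros i Hi'. assert (Hin := nth_In data dd Hi'). unfold kk, mm.
    destruct (nth i data dd) as [[k mu] th]. apply (Hprop k mu th Hin). }
  destruct (uniform_threshold (length data) (fun i M =>
      forall n : nat, (1 <= n) ->
         forall cA : nat, has_card (in_GammaX Gam lam n) cA -> (M <= cA) ->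
         forall b : list elt, length b = 0 -> Forall (in_GammaX Gam lam n) b ->
         sat Gam lam n b (snd (nth i data dd)) ->
         forall c : nat,
           has_card (fun a => in_GammaX Gam lam n a /\ sat Gam lam n (a :: b) (FP s0 (TVar 0))) c ->
           (Rabs (INR c - mm i * Rpower (INR cA) (INR (kk i) / INR N))
             <= tolerance (kk i) (mm i) * Rpower (INR cA) (INR (kk i) / INR N))%R)) as [Mx HMx].
  { intros i M M' HMM HQ n Hn cA HcA HM'. apply HQ; auto; lia. }
  { intros i Hi'. apply (Hii i Hi'), tolerance_pos, Hmpos, Hi'. }
  destruct (exists_nat_above (length data) (fun i => Rmax (mm i + 1) ((2 / mm i) ^ N))) as [n0 Hn0].
  set (n := Nat.max 1 (Nat.max n0 Mx)).
  destruct (has_card_Gamma_subset Gam lam n (in_GammaX Gam lam n)) as [cA HcA]; auto.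
  assert (HcAD : n ^ D <= cA).
  { rewrite <- Hcmax. eapply hc_le; [|apply (card_fiber Gam lam n smax Hsmax)|exact HcA]. simpl; tauto. }
  assert (Hcard : has_card (fun a => in_GammaX Gam lam n a /\ sat Gam lam n (a :: nil) (FP s0 (TVar 0))) n).
  { pose proof (card_fiber Gam lam n s0 Hs0) as HF. rewrite Hci0, Nat.pow_1_r in HF.
    eapply hc_ext; [|exact HF].
    intros a. simpl. split; [intros [Ha Hp]; auto|intros [Ha [_ Hp]]; auto]. }
  assert (Hn1 : 1 <= n) by lia.
  destruct (proj1 (Hi n Hn1 [] eq_refl (Forall_nil _))) as [i [Hi' Hsat]].
  assert (Hnn0 : (INR n0 <= INR n)%R) by (apply le_INR; lia).
  specialize (Hn0 i Hi').
  pose proof (Rmax_l (mm i + 1) ((2 / mm i) ^ N)). pose proof (Rmax_r (mm i + 1) ((2 / mm i) ^ N)).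
  apply (fibre_estimate_fails N D (kk i) n cA (mm i) HN1 HND Hn1 (Hmpos i Hi') HcAD); try lra.
  pose proof (le_pow_self n D ltac:(lia)).
  apply (HMx i Hi' n Hn1 cA HcA ltac:(lia) [] eq_refl (Forall_nil _) Hsat n Hcard).
Qed.

Theorem mainTheorem12 (Gam : list (list nat)) (lam : list nat -> bool) :
  tree_plan Gam lam ->
  (exists s, In s Gam /\ lam s = true) ->
  (1 <= degP Gam lam)%nat /\
  asymptotic_class Gam lam (degP Gam lam) /\
  (forall n : nat, (1 <= n)%nat -> (n < degP Gam lam)%nat ->
     ~ asymptotic_class Gam lam n).
Proof.
  intros Htp Hex.
  assert (HD : 1 <= degP Gam lam) by (apply degP_pos; auto).
  split; [exact HD|split].
  - apply asymptotic_class_degP; auto.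
  - intros N HN1 HND. apply not_asymptotic_class_below_degP; auto.
Qed.
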